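(* The satisfiability problem for $\exists^*\forall^*\mathsf{SL}(\mathsf{LIA})_{\mathsf{Int},\mathsf{Int}}$ is undecidable: there is no algorithm which, given a sentence $\exists x_1\ldots\exists x_m\forall y_1\ldots\forall y_n ~.~\varphi$ with $\varphi$ a quantifier-free $\mathsf{SL}(\mathsf{LIA})_{\mathsf{Int},\mathsf{Int}}$ formula, decides whether some heap $h$ (together with the standard model of $\mathsf{LIA}$) satisfies it.
   Context: $\mathsf{LIA}$ is linear integer arithmetic: sort $\mathsf{Int}$ interpreted as the integers, with $\geq$, $+$, constants $0,1$ interpreted as usual. $\mathsf{SL}(\mathsf{LIA})_{\mathsf{Int},\mathsf{Int}}$ is separation logic in which both locations and data are of sort $\mathsf{Int}$: formulas are generated by $\varphi ::= \phi \mid \mathsf{emp} \mid t \mapsto u \mid \varphi_1 * \varphi_2 \mid \varphi_1 \mathrel{-\!\!*} \varphi_2 \mid \neg\varphi_1 \mid \varphi_1 \wedge \varphi_2 \mid \exists x ~.~ \varphi_1$, where $\phi$ is a $\mathsf{LIA}$ formula and $t,u$ are $\mathsf{LIA}$ terms; $\forall x.\varphi$ abbreviates $\neg\exists x.\neg\varphi$; there is a designated constant $\mathsf{nil}$ of sort $\mathsf{Int}$. A heap is a finite partial function $h$ from integers to integers. Semantics: $\mathcal{I},h \models \phi$ iff $\mathcal{I} \models \phi$ for $\mathsf{LIA}$ formulas $\phi$; $\mathcal{I},h\models \mathsf{emp}$ iff $h=\emptyset$; $\mathcal{I},h \models t\mapsto u$ iff $h=\{(t^\mathcal{I},u^\mathcal{I})\}$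 and $t^\mathcal{I}\neq \mathsf{nil}^\mathcal{I}$; $\mathcal{I},h\models \varphi_1*\varphi_2$ iff $h = h_1 \uplus h_2$ (disjoint domains) with $\mathcal{I},h_i\models\varphi_i$; $\mathcal{I},h\models \varphi_1\mathrel{-\!\!*}\varphi_2$ iff for every heap $h'$ with domain disjoint from $\mathrm{dom}(h)$ and $\mathcal{I},h'\models\varphi_1$, $\mathcal{I},h'\uplus h\models\varphi_2$; $\mathcal{I},h\models\exists x.\varphi$ iff $\mathcal{I}[x\leftarrow s],h\models\varphi$ for some integer $s$; Boolean connectives are classical. $\exists^*\forall^*\mathsf{SL}(\mathsf{LIA})_{\mathsf{Int},\mathsf{Int}}$ consists of sentences with quantifier prefix $\exists^*\forall^*$ and quantifier-free matrix. *)

From Stdlib Require Import ZArith List Arith.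
Import ListNotations.
Open Scope Z_scope.

Inductive term : Type :=
| TVar  : nat -> term
| TNil  : term
| TZero : term
| TOne  : term
| TPlus : term -> term -> term.

Inductive form : Type :=
| FGe     : term -> term -> form
| FEmp    : form
| FPto    : term -> term -> form
| FSep    : form -> form -> form
| FWand   : form -> form -> form
| FNot    : form -> form
| FAnd    : form -> form -> form
| FExists : nat -> form -> form.

Definition FForall (x : nat) (f : form) : form := FNot (FExists x (FNot f)).

Fixpoint qfree (f : form) : Prop :=
  match f with
  | FGe _ _ | FEmp | FPto _ _ => True
  | FSep a b | FWand a b | FAnd a b => qfree a /\ qfree b
  | FNot a => qfree a
  | FExists _ _ => False
  end.

Fixpoint term_vars_below (k : nat) (t : term) : Prop :=
  match t with
  | TVar i => (i < k)%nat
  | TNil | TZero | TOne => True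
  | TPlus a b => term_vars_below k a /\ term_vars_below k b
  end.

Fixpoint vars_below (k : nat) (f : form) : Prop :=
  match f with
  | FGe t u | FPto t u => term_vars_below k t /\ term_vars_below k u
  | FEmp => True
  | FSep a b | FWand a b | FAnd a b => vars_below k a /\ vars_below k b
  | FNot a => vars_below k a
  | FExists _ a => vars_below k a
  end.

(* The sentence  exists x_0 .. x_{m-1} forall x_m .. x_{m+n-1} . phi *)
Fixpoint forall_block (start n : nat) (f : form) : form :=
  match n with
  | O => f
  | S n' => FForall start (forall_block (S start) n' f)
  end.

Fixpoint exists_block (start m : nat) (f : form) : form :=
  match m with
  | O => f
  | S m' => FExists start (exists_block (S start) m' f)
  end.

Definition EA_sentence (m n : nat) (phi : form) : form :=
  exists_block 0 m (forall_block m n phi).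

Definition heap := Z -> option Z.

Definition finite_heap (h : heap) : Prop :=
  exists l : list Z, forall x, h x <> None -> In x l.

Definition hdisjoint (h1 h2 : heap) : Prop :=
  forall x, h1 x = None \/ h2 x = None.

Definition hunion (h1 h2 : heap) : heap :=
  fun x => match h1 x with Some v => Some v | None => h2 x end.

Definition env := nat -> Z.

Definition upd (e : env) (x : nat) (s : Z) : env :=
  fun y => if Nat.eqb y x then s else e y.

Fixpoint teval (nilv : Z) (e : env) (t : term) : Z :=
  match t with
  | TVar i => e i
  | TNil => nilv
  | TZero => 0
  | TOne => 1
  | TPlus a b => teval nilv e a + teval nilv e b
  end.

Fixpoint sat (nilv : Z) (e : env) (h : heap) (f : form) : Prop :=
  match f with
  | FGe t u => teval nilv e t >= teval nilv e u
  | FEmp => forall x, h x = None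
  | FPto t u =>
      teval nilv e t <> nilv /\
      h (teval nilv e t) = Some (teval nilv e u) /\
      (forall x, x <> teval nilv e t -> h x = None)
  | FSep a b =>
      exists h1 h2, finite_heap h1 /\ finite_heap h2 /\ hdisjoint h1 h2 /\
        (forall x, h x = hunion h1 h2 x) /\
        sat nilv e h1 a /\ sat nilv e h2 b
  | FWand a b =>
      forall h', finite_heap h' -> hdisjoint h' h -> sat nilv e h' a ->
        sat nilv e (hunion h' h) b
  | FNot a => ~ sat nilv e h a
  | FAnd a b => sat nilv e h a /\ sat nilv e h b
  | FExists x a => exists s : Z, sat nilv (upd e x s) h a
  end.

(* Satisfiability of a sentence: some interpretation (of nil; LIA symbols
   are standard) and some finite heap satisfy it.  The environment is
   irrelevant for sentences; we fix it to the constant 0. *)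
Definition satisfiable (f : form) : Prop :=
  exists (nilv : Z) (h : heap), finite_heap h /\ sat nilv (fun _ => 0) h f.

Inductive recf : Type :=
| RZero : recf
| RSucc : recf
| RProj : nat -> recf
| RComp : recf -> list recf -> recf
| RPrec : recf -> recf -> recf
| RMu   : recf -> recf.

Inductive reval : recf -> list nat -> nat -> Prop :=
| ev_zero v : reval RZero v 0
| ev_succ x v : reval RSucc (x :: v) (S x)
| ev_proj i v : (i < length v)%nat -> reval (RProj i) v (nth i v 0%nat)
| ev_comp f gs v ws y :
    revals gs v ws -> reval f ws y -> reval (RComp f gs) v y
| ev_prec0 f g v y : reval f v y -> reval (RPrec f g) (0%nat :: v) y
| ev_precS f g n v r y :
    reval (RPrec f g) (n :: v) r -> reval g (n :: r :: v) y ->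
    reval (RPrec f g) (S n :: v) y
| ev_mu f v n :
    reval f (n :: v) 0%nat ->
    (forall k, (k < n)%nat -> exists r, reval f (k :: v) (S r)) ->
    reval (RMu f) v n
with revals : list recf -> list nat -> list nat -> Prop :=
| evs_nil v : revals [] v []
| evs_cons g gs v w ws : reval g v w -> revals gs v ws -> revals (g :: gs) v (w :: ws).

Definition cpair (a b : nat) : nat := ((a + b) * S (a + b) / 2 + b)%nat.

Fixpoint code_term (t : term) : nat :=
  match t with
  | TVar i => cpair 0 i
  | TNil => cpair 1 0
  | TZero => cpair 2 0
  | TOne => cpair 3 0
  | TPlus a b => cpair 4 (cpair (code_term a) (code_term b))
  end.

Fixpoint code_form (f : form) : nat :=
  match f with
  | FGe t u => cpair 0 (cpair (code_term t) (code_term u))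
  | FEmp => cpair 1 0
  | FPto t u => cpair 2 (cpair (code_term t) (code_term u))
  | FSep a b => cpair 3 (cpair (code_form a) (code_form b))
  | FWand a b => cpair 4 (cpair (code_form a) (code_form b))
  | FNot a => cpair 5 (code_form a)
  | FAnd a b => cpair 6 (cpair (code_form a) (code_form b))
  | FExists x a => cpair 7 (cpair x (code_form a))
  end.

Definition code_EA (m n : nat) (phi : form) : nat :=
  cpair m (cpair n (code_form phi)).

Definition decides_EA_sat (d : recf) : Prop :=
  forall (m n : nat) (phi : form),
    qfree phi -> vars_below (m + n) phi ->
    (satisfiable (EA_sentence m n phi) -> reval d [code_EA m n phi] 1%nat) /\
    (~ satisfiable (EA_sentence m n phi) -> reval d [code_EA m n phi] 0%nat).

(* Suppose [d] decides the fragment.  The computations of any mu-recursive program [f] can be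
   laid out in a heap: a record holds a node of [f], its arguments, its output and relative
   pointers to the records of its sub-computations, and for every node a universally quantified
   rule checks, at every address, the corresponding clause of the evaluation relation; the magic
   wand forces the records that a rule points to to be allocated.  Hence the sentence
   [exists x0 root, forall a fields, x0 = n /\ B_f] is satisfiable iff [f] outputs 0 on [n].
   Now take [f := d o diag], where [diag] maps the code of a formula [B] to the code of
   [exists x0 root, forall a fields, x0 = code B /\ B], and [B := B_f]: the sentence obtained
   is satisfiable iff [d] answers 0 on its own code, i.e. iff it is not satisfiable. *)

From Stdlib Require Import ZArith List Lia.
From Stdlib Require Import Classical ClassicalEpsilon FunctionalExtensionality.
Import ListNotations.
Open Scope Z_scope.

(** * Derived connectives and quantifier blocks *)

Definition ftrue : form := FGe TZero TZero.
Definition ffalse : form := FNot ftrue.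
Definition fimp (a b : form) : form := FNot (FAnd a (FNot b)).
Definition feq (t u : term) : form := FAnd (FGe t u) (FGe u t).

Fixpoint fconj (l : list form) : form :=
  match l with [] => ftrue | f :: l' => FAnd f (fconj l') end.

Fixpoint numeral (n : nat) : term :=
  match n with O => TZero | S k => TPlus (numeral k) TOne end.

Definition fpoints_to_in (t u : term) : form := FSep (FPto t u) ftrue.

(* [t |-> 0 -* false] holds iff no disjoint cell [t] can be added, i.e. iff [t] is allocated. *)
Definition fallocated (t : term) : form :=
  FAnd (FNot (feq t TNil)) (FWand (FPto t TZero) ffalse).

Lemma teval_numeral nv e n : teval nv e (numeral n) = Z.of_nat n.
Proof. induction n; simpl; [reflexivity | rewrite IHn; lia]. Qed.

Lemma sat_fimp nv e h a b : sat nv e h (fimp a b) <-> (sat nv e h a -> sat nv e h b).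
Proof.
  simpl. split.
  - intros H Ha. apply NNPP. intros Hb. apply H. auto.
  - intros H [Ha Hb]. auto.
Qed.

Lemma sat_fconj nv e h l : sat nv e h (fconj l) <-> Forall (sat nv e h) l.
Proof.
  induction l as [|f l IH]; simpl.
  - split; auto. intros _. lia.
  - rewrite IH, Forall_cons_iff. reflexivity.
Qed.

Lemma sat_feq nv e h t u : sat nv e h (feq t u) <-> teval nv e t = teval nv e u.
Proof. simpl. lia. Qed.

Definition singleton_heap (a v : Z) : heap := fun x => if Z.eq_dec x a then Some v else None.

Lemma finite_singleton_heap a v : finite_heap (singleton_heap a v).
Proof.
  exists [a]. intros x Hx. unfold singleton_heap in Hx.
  destruct (Z.eq_dec x a); [left; auto | congruence].
Qed.

Lemma sat_FPto_singleton nv e t u :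
  teval nv e t <> nv -> sat nv e (singleton_heap (teval nv e t) (teval nv e u)) (FPto t u).
Proof.
  intros Hn. simpl. unfold singleton_heap. split; [exact Hn|]. split.
  - destruct (Z.eq_dec _ _); congruence.
  - intros x Hx. destruct (Z.eq_dec x _); congruence.
Qed.

Lemma sat_fpoints_to_in nv e h t u : finite_heap h ->
  sat nv e h (fpoints_to_in t u) <->
  teval nv e t <> nv /\ h (teval nv e t) = Some (teval nv e u).
Proof.
  intros [l Hl]. unfold fpoints_to_in. cbn [sat]. split.
  - intros (h1 & h2 & _ & _ & _ & Hu & (Hn & H1 & _) & _). split; auto.
    rewrite Hu. unfold hunion. rewrite H1. reflexivity.
  - intros [Hn Hh]. set (tv := teval nv e t).
    exists (singleton_heap tv (teval nv e u)), (fun x => if Z.eq_dec x tv then None else h x).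
    split; [apply finite_singleton_heap|]. split.
    { exists l. intros x. destruct (Z.eq_dec x tv); [congruence | apply Hl]. }
    split; [intros x; unfold singleton_heap; destruct (Z.eq_dec x tv); auto|]. split.
    { intros x. unfold hunion, singleton_heap. destruct (Z.eq_dec x tv); subst; auto. }
    split; [apply sat_FPto_singleton, Hn | simpl; lia].
Qed.

Lemma sat_fallocated nv e h t :
  sat nv e h (fallocated t) <-> teval nv e t <> nv /\ h (teval nv e t) <> None.
Proof.
  unfold fallocated. simpl. split.
  - intros [Hn Hw]. assert (Htn : teval nv e t <> nv) by lia. split; [exact Htn|].
    intros Hh. apply (Hw (singleton_heap (teval nv e t) 0)).
    + apply finite_singleton_heap.
    + intros x. unfold singleton_heap. destruct (Z.eq_dec x _); subst; auto.
    + apply (sat_FPto_singleton nv e t TZero Htn).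
    + lia.
  - intros [Hn Hh]. split; [lia|].
    intros h' _ Hd (_ & H1 & _). exfalso. destruct (Hd (teval nv e t)); congruence.
Qed.

Lemma sat_exists_block nv h f m : forall s e,
  sat nv e h (exists_block s m f) <->
  exists e', (forall i, (i < s \/ s + m <= i)%nat -> e' i = e i) /\ sat nv e' h f.
Proof.
  induction m as [|m IH]; intros s e; simpl.
  - split.
    + intros H. exists e. auto.
    + intros (e' & He & H).
      replace e with e' by (apply functional_extensionality; intros i; apply He; lia). exact H.
  - split.
    + intros (v & Hv). apply IH in Hv. destruct Hv as (e' & He & H). exists e'. split; auto.
      intros i Hi. rewrite He by lia. unfold upd. destruct (Nat.eqb_spec i s); [lia | auto].
    + intros (e' & He & H). exists (e' s). apply IH. exists e'. split; auto.
      intros i Hi. unfold upd. destruct (Nat.eqb_spec i s); [subst; auto|]. apply He. lia.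
Qed.

Lemma sat_forall_block nv h f n : forall s e,
  sat nv e h (forall_block s n f) <->
  forall e', (forall i, (i < s \/ s + n <= i)%nat -> e' i = e i) -> sat nv e' h f.
Proof.
  induction n as [|n IH]; intros s e; simpl.
  - split.
    + intros H e' He.
      replace e' with e by (apply functional_extensionality; intros i; symmetry; apply He; lia).
      exact H.
    + intros H. apply H. auto.
  - split.
    + intros H e' He. apply NNPP. intros Hn. apply H. exists (e' s). intros Hs.
      rewrite IH in Hs. apply Hn, Hs. intros i Hi. unfold upd.
      destruct (Nat.eqb_spec i s); [subst; auto|]. apply He. lia.
    + intros H [v Hv]. apply Hv. rewrite IH. intros e' He. apply H. intros i Hi.
      rewrite He by lia. unfold upd. destruct (Nat.eqb_spec i s); [lia | auto].
Qed.

(** * Mu-recursive functions *)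

Section RevalNestedInd.
Variable P : recf -> list nat -> nat -> Prop.
Variable Ps : list recf -> list nat -> list nat -> Prop.
Hypothesis Hzero : forall v, P RZero v 0.
Hypothesis Hsucc : forall x v, P RSucc (x :: v) (S x).
Hypothesis Hproj : forall i v, (i < length v)%nat -> P (RProj i) v (nth i v 0%nat).
Hypothesis Hcomp : forall f gs v ws y,
  revals gs v ws -> Ps gs v ws -> reval f ws y -> P f ws y -> P (RComp f gs) v y.
Hypothesis Hprec0 : forall f g v y, reval f v y -> P f v y -> P (RPrec f g) (0%nat :: v) y.
Hypothesis HprecS : forall f g n v r y,
  reval (RPrec f g) (n :: v) r -> P (RPrec f g) (n :: v) r ->
  reval g (n :: r :: v) y -> P g (n :: r :: v) y -> P (RPrec f g) (S n :: v) y.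
Hypothesis Hmu : forall f v n, reval f (n :: v) 0%nat -> P f (n :: v) 0%nat ->
  (forall k, (k < n)%nat -> exists r, reval f (k :: v) (S r) /\ P f (k :: v) (S r)) ->
  P (RMu f) v n.
Hypothesis Hnil : forall v, Ps [] v [].
Hypothesis Hcons : forall g gs v w ws,
  reval g v w -> P g v w -> revals gs v ws -> Ps gs v ws -> Ps (g :: gs) v (w :: ws).

Fixpoint reval_nested_ind f v y (H : reval f v y) {struct H} : P f v y :=
  match H in reval f v y return P f v y with
  | ev_zero v => Hzero v
  | ev_succ x v => Hsucc x v
  | ev_proj i v Hi => Hproj i v Hi
  | ev_comp f gs v ws y Hs Hf =>
      Hcomp f gs v ws y Hs (revals_nested_ind gs v ws Hs) Hf (reval_nested_ind f ws y Hf)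
  | ev_prec0 f g v y Hf => Hprec0 f g v y Hf (reval_nested_ind _ _ _ Hf)
  | ev_precS f g n v r y H1 H2 =>
      HprecS f g n v r y H1 (reval_nested_ind _ _ _ H1) H2 (reval_nested_ind _ _ _ H2)
  | ev_mu f v n H0 Hall => Hmu f v n H0 (reval_nested_ind _ _ _ H0)
      (fun k hk => match Hall k hk with
                   | ex_intro _ r Hr => ex_intro _ r (conj Hr (reval_nested_ind _ _ _ Hr)) end)
  end
with revals_nested_ind gs v ws (H : revals gs v ws) {struct H} : Ps gs v ws :=
  match H in revals gs v ws return Ps gs v ws with
  | evs_nil v => Hnil v
  | evs_cons g gs v w ws Hg Hgs =>
      Hcons g gs v w ws Hg (reval_nested_ind _ _ _ Hg) Hgs (revals_nested_ind _ _ _ Hgs)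
  end.

End RevalNestedInd.

Lemma reval_functional f v y : reval f v y -> forall y', reval f v y' -> y = y'.
Proof.
  revert f v y.
  apply (reval_nested_ind (fun f v y => forall y', reval f v y' -> y = y')
                          (fun gs v ws => forall ws', revals gs v ws' -> ws = ws')).
  - intros v y' H. inversion H; auto.
  - intros x v y' H. inversion H; auto.
  - intros i v _ y' H. inversion H; auto.
  - intros f gs v ws y _ IHs _ IHf y' H. inversion H; subst.
    match goal with Hx : revals _ _ _ |- _ => apply IHs in Hx end. subst. auto.
  - intros f g v y _ IH y' H. inversion H; subst. auto.
  - intros f g n v r y _ IH1 _ IH2 y' H. inversion H; subst.
    match goal with Hx : reval (RPrec _ _) _ _ |- _ => apply IH1 in Hx end. subst. auto.
  - intros f v n _ IH0 Hall y' H. inversion H; subst.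
    destruct (lt_eq_lt_dec n y') as [[Hlt | Heq] | Hgt]; auto.
    + match goal with Hx : forall k, (k < y')%nat -> _ |- _ =>
        destruct (Hx _ Hlt) as (r & Hr) end.
      apply IH0 in Hr. discriminate.
    + destruct (Hall _ Hgt) as (r & _ & Hr).
      match goal with Hx : reval f (y' :: v) 0 |- _ => apply Hr in Hx end. discriminate.
  - intros v ws' H. inversion H; auto.
  - intros g gs v w ws _ IHg _ IHgs ws' H. inversion H; subst. f_equal; auto.
Qed.

Fixpoint recf_nested_ind (P : recf -> Prop) (Hz : P RZero) (Hs : P RSucc)
  (Hp : forall i, P (RProj i))
  (Hc : forall g gs, P g -> Forall P gs -> P (RComp g gs))
  (Hpr : forall g1 g2, P g1 -> P g2 -> P (RPrec g1 g2))
  (Hm : forall g, P g -> P (RMu g)) (f : recf) {struct f} : P f :=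
  let IH := recf_nested_ind P Hz Hs Hp Hc Hpr Hm in
  match f with
  | RZero => Hz
  | RSucc => Hs
  | RProj i => Hp i
  | RComp g gs => Hc g gs (IH g)
      ((fix F (l : list recf) : Forall P l :=
          match l with [] => Forall_nil P | x :: l' => Forall_cons x (IH x) (F l') end) gs)
  | RPrec g1 g2 => Hpr g1 g2 (IH g1) (IH g2)
  | RMu g => Hm g (IH g)
  end.

Lemma reval_comp1 f g v w y : reval g v w -> reval f [w] y -> reval (RComp f [g]) v y.
Proof. intros. eapply ev_comp; eauto. repeat constructor; auto. Qed.

Lemma reval_comp1_inv f g v y :
  reval (RComp f [g]) v y -> exists w, reval g v w /\ reval f [w] y.
Proof.
  intros H. inversion H; subst.
  match goal with Hs : revals _ _ _ |- _ => inversion Hs; subst end.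
  match goal with Hs : revals [] _ _ |- _ => inversion Hs; subst end. eauto.
Qed.

Lemma reval_comp2 f g1 g2 v w1 w2 y :
  reval g1 v w1 -> reval g2 v w2 -> reval f [w1; w2] y -> reval (RComp f [g1; g2]) v y.
Proof. intros. eapply ev_comp; eauto. repeat constructor; auto. Qed.

Lemma revals_map_seq gs v (F : nat -> nat) :
  (forall j, (j < length gs)%nat -> reval (nth j gs RZero) v (F j)) ->
  revals gs v (map F (seq 0 (length gs))).
Proof.
  revert F. induction gs as [|g gs IH]; intros F H; simpl; constructor.
  - apply (H 0%nat). simpl; lia.
  - rewrite <- seq_shift, map_map. apply IH. intros j Hj. apply (H (S j)). simpl; lia.
Qed.

Lemma reval_proj_nth i v y : (i < length v)%nat -> nth i v 0%nat = y -> reval (RProj i) v y.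
Proof. intros H <-. constructor; auto. Qed.

Fixpoint rconst (c : nat) : recf :=
  match c with O => RZero | S k => RComp RSucc [rconst k] end.

Lemma reval_rconst c v : reval (rconst c) v c.
Proof.
  induction c; simpl.
  - constructor.
  - eapply ev_comp; repeat constructor. apply IHc.
Qed.

Definition radd : recf := RPrec (RProj 0) (RComp RSucc [RProj 1]).

Lemma reval_radd n m : reval radd [n; m] (n + m)%nat.
Proof.
  induction n.
  - apply ev_prec0. apply reval_proj_nth; simpl; auto.
  - eapply ev_precS; [apply IHn|]. apply reval_comp1 with (w := (n + m)%nat).
    + apply reval_proj_nth; simpl; auto.
    + constructor.
Qed.

Fixpoint tri (s : nat) : nat := match s with O => O | S n => (tri n + S n)%nat end.

Definition rtri : recf := RPrec RZero (RComp radd [RProj 1; RComp RSucc [RProj 0]]).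

Lemma reval_rtri s : reval rtri [s] (tri s).
Proof.
  induction s.
  - apply ev_prec0. constructor.
  - eapply ev_precS; [apply IHs|]. simpl.
    apply reval_comp2 with (w1 := tri s) (w2 := S s).
    + apply reval_proj_nth; simpl; auto.
    + apply reval_comp1 with (w := s); [apply reval_proj_nth; simpl; auto | constructor].
    + apply reval_radd.
Qed.

Lemma cpair_tri a b : cpair a b = (tri (a + b) + b)%nat.
Proof.
  assert (Htri : forall s, (2 * tri s = s * S s)%nat) by (induction s; simpl tri; nia).
  unfold cpair. f_equal. rewrite <- Htri, Nat.mul_comm. apply Nat.div_mul. lia.
Qed.

Definition rcpair : recf := RComp radd [RComp rtri [radd]; RProj 1].

Lemma reval_rcpair a b : reval rcpair [a; b] (cpair a b).
Proof.
  rewrite cpair_tri. eapply reval_comp2.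
  - apply reval_comp1 with (w := (a + b)%nat); [apply reval_radd | apply reval_rtri].
  - apply reval_proj_nth; simpl; auto.
  - apply reval_radd.
Qed.

Definition rpair (g1 g2 : recf) : recf := RComp rcpair [g1; g2].

Lemma reval_rpair g1 g2 v a b :
  reval g1 v a -> reval g2 v b -> reval (rpair g1 g2) v (cpair a b).
Proof. intros. eapply reval_comp2; eauto. apply reval_rcpair. Qed.

Definition rcode_numeral : recf :=
  RPrec (rconst (cpair 2 0)) (rpair (rconst 4) (rpair (RProj 1) (rconst (cpair 3 0)))).

Lemma reval_rcode_numeral y : reval rcode_numeral [y] (code_term (numeral y)).
Proof.
  induction y; simpl.
  - apply ev_prec0. apply reval_rconst.
  - eapply ev_precS; [apply IHy|].
    apply reval_rpair; [apply reval_rconst|].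
    apply reval_rpair; [apply reval_proj_nth; simpl; auto | apply reval_rconst].
Qed.

Definition pin_x0 (n : nat) (B : form) : form := FAnd (feq (TVar 0) (numeral n)) B.

Definition rcode_x0_eq : recf :=
  let rcode_x0 := rconst (cpair 0 0) in
  rpair (rconst 6) (rpair (rpair (rconst 0) (rpair rcode_x0 rcode_numeral))
                          (rpair (rconst 0) (rpair rcode_numeral rcode_x0))).

Lemma reval_rcode_x0_eq y : reval rcode_x0_eq [y] (code_form (feq (TVar 0) (numeral y))).
Proof. repeat apply reval_rpair; apply reval_rconst || apply reval_rcode_numeral. Qed.

Definition rdiag (M N : nat) : recf :=
  rpair (rconst M) (rpair (rconst N) (rpair (rconst 6) (rpair rcode_x0_eq (RProj 0)))).

Lemma reval_rdiag M N B :
  reval (rdiag M N) [code_form B] (code_EA M N (pin_x0 (code_form B) B)).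
Proof.
  do 3 (apply reval_rpair; [apply reval_rconst|]).
  apply reval_rpair; [apply reval_rcode_x0_eq | apply reval_proj_nth; simpl; auto].
Qed.

(** * Computation trees *)

(* A [Call] node [(f, ar)] certifies [reval f v y] for the [ar] arguments [v] and the output [y]
   stored in its record; a [Search] node [(f, ar)] with output [c] certifies that [f (k :: v)] is
   positive for every [k < c], i.e. the failed trials of a minimisation. *)
Inductive node_kind := Call | Search.
Definition node := (node_kind * recf * nat)%type.

Fixpoint nodes_of (f : recf) (ar : nat) : list node :=
  (Call, f, ar) :: match f with
  | RComp g gs => nodes_of g (length gs) ++ flat_map (fun g' => nodes_of g' ar) gs
  | RPrec g1 g2 => nodes_of g1 (pred ar) ++ nodes_of g2 (S ar)
  | RMu g => (Search, g, ar) :: nodes_of g (S ar)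
  | _ => []
  end.

Definition node_eq_dec (a b : node) : {a = b} + {a <> b} := excluded_middle_informative (a = b).

Fixpoint node_index (D : node) (l : list node) : nat :=
  match l with
  | [] => O
  | D' :: l' => if node_eq_dec D D' then O else S (node_index D l')
  end.

Lemma nth_node_index D l d : In D l -> nth (node_index D l) l d = D.
Proof.
  induction l as [|D' l IH]; simpl; [tauto|]. intros H.
  destruct (node_eq_dec D D'); auto. destruct H; [congruence | auto].
Qed.

Lemma node_index_inj D1 D2 l : In D1 l -> In D2 l -> node_index D1 l = node_index D2 l -> D1 = D2.
Proof.
  intros H1 H2 E.
  rewrite <- (nth_node_index D1 l D1 H1), <- (nth_node_index D2 l D1 H2), E. reflexivity.
Qed.

Definition closed_nodes (nds : list node) : Prop := forall D, In D nds ->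
  match D with
  | (Call, RComp g gs, ar) =>
      In (Call, g, length gs) nds /\ forall g', In g' gs -> In (Call, g', ar) nds
  | (Call, RPrec g1 g2, ar) => In (Call, g1, pred ar) nds /\ In (Call, g2, S ar) nds
  | (Call, RMu g, ar) => In (Call, g, S ar) nds /\ In (Search, g, ar) nds
  | (Search, g, ar) => In (Call, g, S ar) nds
  | _ => True
  end.

Definition arities_below (L : nat) (nds : list node) : Prop :=
  forall D, In D nds -> (snd D < L)%nat.

Definition descendants (D : node) : list node :=
  match D with (Call, g, ar) => nodes_of g ar | (Search, g, ar) => nodes_of g (S ar) end.

Lemma nodes_of_self f ar : In (Call, f, ar) (nodes_of f ar).
Proof. destruct f; left; reflexivity. Qed.

Lemma descendants_incl f ar D : In D (nodes_of f ar) -> incl (descendants D) (nodes_of f ar).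
Proof.
  revert ar D. induction f as [| | i | g gs IHg IHgs | g1 g2 IH1 IH2 | g IH] using recf_nested_ind;
    intros ar D HD; simpl in HD; (destruct HD as [<- | HD]; [apply incl_refl|]); try contradiction.
  - apply in_app_iff in HD as [HD | HD].
    + eapply incl_tran; [apply (IHg _ _ HD)|]. intros x Hx. right. apply in_app_iff. left; exact Hx.
    + apply in_flat_map in HD as (g' & Hg' & HD). rewrite Forall_forall in IHgs.
      eapply incl_tran; [apply (IHgs g' Hg' _ _ HD)|]. intros x Hx. right. apply in_app_iff.
      right. apply in_flat_map. exists g'. split; assumption.
  - apply in_app_iff in HD as [HD | HD].
    + eapply incl_tran; [apply (IH1 _ _ HD)|]. intros x Hx. right. apply in_app_iff. left; exact Hx.
    + eapply incl_tran; [apply (IH2 _ _ HD)|].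
      intros x Hx. right. apply in_app_iff. right; exact Hx.
  - destruct HD as [<- | HD].
    + intros x Hx. right. right. exact Hx.
    + eapply incl_tran; [apply (IH _ _ HD)|]. intros x Hx. right. right. exact Hx.
Qed.

Lemma closed_nodes_of f ar : closed_nodes (nodes_of f ar).
Proof.
  intros D HD. pose proof (descendants_incl f ar D HD) as Hi.
  destruct D as [[[|] g] a]; simpl in Hi; [destruct g; auto|].
  - split.
    + apply Hi. right. apply in_app_iff. left. apply nodes_of_self.
    + intros g' Hg'. apply Hi. right. apply in_app_iff. right. apply in_flat_map.
      exists g'. split; [exact Hg' | apply nodes_of_self].
  - split; apply Hi; right; apply in_app_iff; [left | right]; apply nodes_of_self.
  - split; apply Hi; right; [right; apply nodes_of_self | left; reflexivity].
  - apply Hi, nodes_of_self.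
Qed.

Definition arities_at_most (B : nat) (f : recf) (ar : nat) : Prop :=
  forall D, In D (nodes_of f ar) -> (snd D <= B)%nat.

Lemma arities_at_most_leaf B f ar : (ar <= B)%nat ->
  match f with RZero | RSucc | RProj _ => True | _ => False end -> arities_at_most B f ar.
Proof.
  intros Ha Hf D HD. destruct f; try contradiction; destruct HD as [<- | []]; exact Ha.
Qed.

Lemma arities_at_most_comp B g gs ar : (ar <= B)%nat -> arities_at_most B g (length gs) ->
  (forall g', In g' gs -> arities_at_most B g' ar) -> arities_at_most B (RComp g gs) ar.
Proof.
  intros Ha Hg Hgs D HD. destruct HD as [<- | HD]; [exact Ha|].
  apply in_app_iff in HD as [HD | HD]; [apply Hg, HD|].
  apply in_flat_map in HD as (g' & Hg' & HD). exact (Hgs g' Hg' D HD).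
Qed.

Lemma arities_at_most_prec B g1 g2 ar : (ar <= B)%nat -> arities_at_most B g1 (pred ar) ->
  arities_at_most B g2 (S ar) -> arities_at_most B (RPrec g1 g2) ar.
Proof.
  intros Ha H1 H2 D HD. destruct HD as [<- | HD]; [exact Ha|].
  apply in_app_iff in HD as [HD | HD]; auto.
Qed.

Lemma arities_at_most_rconst B c ar : (ar <= B)%nat -> (1 <= B)%nat ->
  arities_at_most B (rconst c) ar.
Proof.
  intros Ha HB. induction c; simpl.
  - apply arities_at_most_leaf; auto.
  - apply arities_at_most_comp; auto.
    + apply arities_at_most_leaf; simpl; auto.
    + intros g' [<- | []]. exact IHc.
Qed.

Ltac bound_arities := first
  [ apply arities_at_most_rconst; simpl; lia
  | apply arities_at_most_leaf; [simpl; lia | exact I]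
  | apply arities_at_most_comp; [simpl; lia | bound_arities |
      let g := fresh "g" in let Hin := fresh "Hin" in
      intros g Hin; simpl in Hin; repeat (destruct Hin as [<- | Hin]; [bound_arities|]);
      destruct Hin ]
  | apply arities_at_most_prec; [simpl; lia | bound_arities | bound_arities] ].

Lemma arities_rdiag M N : arities_at_most 3 (rdiag M N) 1.
Proof. unfold rdiag, rcode_x0_eq, rpair, rcode_numeral, rcpair, rtri, radd. bound_arities. Qed.

(** * Rules and their translation into formulas *)

Inductive field := Here (o : nat) | Child (o : nat).

Inductive atom :=
| AEq (r1 : field) (c1 : nat) (r2 : field) (c2 : nat)
| AGe (r : field) (c : nat)
| AEqC (r : field) (c : nat)
| AFalse.

(* A rule applies to a record with tag [rule_tag] whose fields satisfy [rule_guard].  It then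
   requires [rule_concl] of that record, or, if [rule_child = Some (o, k)], of that record and the
   record found at the relative address stored in its field [o], which must be tagged [k]. *)
Record rule := mkRule {
  rule_tag : nat; rule_guard : list atom; rule_child : option (nat * nat); rule_concl : list atom }.

(* Record layout for arities below [L]: a tag, [L] inputs, the output, [L + 1] relative
   pointers to child records and [L] auxiliary values. *)
Definition rec_width (L : nat) : nat := (3 * L + 3)%nat.
Definition in_off (i : nat) : nat := S i.
Definition out_off (L : nat) : nat := S L.
Definition ptr_off (L j : nat) : nat := (L + 2 + j)%nat.
Definition aux_off (L j : nat) : nat := (2 * L + 3 + j)%nat.

Definition copy_fields (n : nat) (src dst : nat -> nat) : list atom :=
  map (fun i => AEq (Child (dst i)) 0 (Here (src i)) 0) (seq 0 n).

(* Each rule checks one clause of [reval] at a record of node [D].  A composition keeps the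
   intermediate results in its auxiliary fields; a recursion on [S n] points to the record for
   [n] (same node) and keeps its output in auxiliary field 0; a minimisation with output [c]
   points to a [Search] record, which points to the record of the trial [c - 1] and to the
   [Search] record for [c - 1].  A node used at an impossible arity gets an unsatisfiable rule. *)
Definition rules_of (L : nat) (nds : list node) (D : node) : list rule :=
  let t := node_index D nds in
  let tg D' := node_index D' nds in
  let OUT := out_off L in
  match D with
  | (Call, RZero, _) => [mkRule t [] None [AEqC (Here OUT) 0]]
  | (Call, RSucc, O) => [mkRule t [] None [AFalse]]
  | (Call, RSucc, _) =>
      [mkRule t [] None [AGe (Here (in_off 0)) 0; AEq (Here OUT) 0 (Here (in_off 0)) 1]]
  | (Call, RProj i, ar) =>
      if Nat.ltb i ar then [mkRule t [] None [AEq (Here OUT) 0 (Here (in_off i)) 0]]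
      else [mkRule t [] None [AFalse]]
  | (Call, RComp g gs, ar) =>
      mkRule t [] (Some (ptr_off L (length gs), tg (Call, g, length gs)))
        (copy_fields (length gs) (aux_off L) in_off ++ [AEq (Child OUT) 0 (Here OUT) 0]) ::
      map (fun j => mkRule t [] (Some (ptr_off L j, tg (Call, nth j gs RZero, ar)))
                      (copy_fields ar in_off in_off ++ [AEq (Child OUT) 0 (Here (aux_off L j)) 0]))
        (seq 0 (length gs))
  | (Call, RPrec g1 g2, O) => [mkRule t [] None [AFalse]]
  | (Call, RPrec g1 g2, S ar') =>
      [mkRule t [] None [AGe (Here (in_off 0)) 0];
       mkRule t [AEqC (Here (in_off 0)) 0] (Some (ptr_off L 0, tg (Call, g1, ar')))
         (copy_fields ar' (fun i => in_off (S i)) in_off ++ [AEq (Child OUT) 0 (Here OUT) 0]);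
       mkRule t [AGe (Here (in_off 0)) 1] (Some (ptr_off L 0, t))
         (AEq (Child (in_off 0)) 1 (Here (in_off 0)) 0 ::
          copy_fields ar' (fun i => in_off (S i)) (fun i => in_off (S i)) ++
          [AEq (Child OUT) 0 (Here (aux_off L 0)) 0]);
       mkRule t [AGe (Here (in_off 0)) 1] (Some (ptr_off L 1, tg (Call, g2, S (S ar'))))
         (AEq (Child (in_off 0)) 1 (Here (in_off 0)) 0 ::
          AEq (Child (in_off 1)) 0 (Here (aux_off L 0)) 0 ::
          copy_fields ar' (fun i => in_off (S i)) (fun i => in_off (S (S i))) ++
          [AEq (Child OUT) 0 (Here OUT) 0])]
  | (Call, RMu g, ar) =>
      [mkRule t [] (Some (ptr_off L 0, tg (Call, g, S ar)))
         (AEq (Child (in_off 0)) 0 (Here OUT) 0 ::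
          copy_fields ar in_off (fun i => in_off (S i)) ++ [AEqC (Child OUT) 0]);
       mkRule t [] (Some (ptr_off L 1, tg (Search, g, ar)))
         (copy_fields ar in_off in_off ++ [AEq (Child OUT) 0 (Here OUT) 0])]
  | (Search, g, ar) =>
      [mkRule t [AGe (Here OUT) 1] (Some (ptr_off L 0, tg (Call, g, S ar)))
         (AEq (Child (in_off 0)) 1 (Here OUT) 0 ::
          copy_fields ar in_off (fun i => in_off (S i)) ++ [AGe (Child OUT) 1]);
       mkRule t [AGe (Here OUT) 1] (Some (ptr_off L 1, t))
         (copy_fields ar in_off in_off ++ [AEq (Child OUT) 1 (Here OUT) 0])]
  end.

Lemma rule_tag_rules_of L nds D r : In r (rules_of L nds D) -> rule_tag r = node_index D nds.
Proof.
  destruct D as [[[|] f] ar]; simpl;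
    [destruct f; try destruct ar; try destruct (Nat.ltb _ _) |]; simpl;
    intros H; repeat (destruct H as [<- | H]; [reflexivity |]); try contradiction;
    apply in_map_iff in H; destruct H as (j & <- & _); reflexivity.
Qed.

(* Offsets are clamped into the record, so that every atom only mentions the field variables of
   the sentence; all offsets produced by [rules_of] are in range anyway. *)
Definition clamp (W o : nat) : nat := Nat.min o (W - 1).

Definition field_value (W : nat) (here child : nat -> Z) (r : field) : Z :=
  match r with Here o => here (clamp W o) | Child o => child (clamp W o) end.

Definition atom_holds (W : nat) (here child : nat -> Z) (a : atom) : Prop :=
  match a with
  | AEq r1 c1 r2 c2 =>
      field_value W here child r1 + Z.of_nat c1 = field_value W here child r2 + Z.of_nat c2
  | AGe r c => field_value W here child r >= Z.of_nat c
  | AEqC r c => field_value W here child r = Z.of_nat c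
  | AFalse => False
  end.

Lemma clamp_id W o : (o < W)%nat -> clamp W o = o.
Proof. intros. apply Nat.min_l. lia. Qed.

Lemma Forall_atom_holds_ext W here child here' child' l : (1 <= W)%nat ->
  (forall o, (o < W)%nat -> here o = here' o) -> (forall o, (o < W)%nat -> child o = child' o) ->
  Forall (atom_holds W here child) l -> Forall (atom_holds W here' child') l.
Proof.
  intros HW Hh Hc.
  assert (E : forall r, field_value W here child r = field_value W here' child' r).
  { intros []; simpl; [apply Hh | apply Hc]; unfold clamp; lia. }
  apply Forall_impl. intros a. destruct a; simpl; rewrite ?E; auto.
Qed.

Lemma Forall_copy_fields W here child n src dst :
  (forall i, (i < n)%nat -> src i < W /\ dst i < W)%nat ->
  Forall (atom_holds W here child) (copy_fields n src dst) <->
  forall i, (i < n)%nat -> child (dst i) = here (src i).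
Proof.
  intros Hn. unfold copy_fields. rewrite Forall_map, Forall_forall. split.
  - intros H i Hi. specialize (H i (proj2 (in_seq n 0 i) ltac:(lia))). simpl in H.
    rewrite !clamp_id in H by apply Hn, Hi. lia.
  - intros H i Hi. apply in_seq in Hi. simpl. rewrite !clamp_id by (apply Hn; lia).
    rewrite H by lia. lia.
Qed.

Definition heap_val (h : heap) (a : Z) : Z := match h a with Some v => v | None => 0 end.
Definition field_at (h : heap) (a : Z) (o : nat) : Z := heap_val h (a + Z.of_nat o).

Definition allocated_block (W : nat) (nv : Z) (h : heap) (a : Z) : Prop :=
  forall o, (o < W)%nat -> a + Z.of_nat o <> nv /\ h (a + Z.of_nat o) <> None.

Definition tag (k : nat) : Z := - Z.of_nat (S k).

Definition tagged_block (W : nat) (nv : Z) (h : heap) (a : Z) (k : nat) : Prop :=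
  allocated_block W nv h a /\ h a = Some (tag k).

Lemma tagged_block_iff W nv h a k : (1 <= W)%nat ->
  tagged_block W nv h a k <-> allocated_block W nv h a /\ field_at h a 0 = tag k.
Proof.
  intros HW. unfold tagged_block, field_at, heap_val. rewrite Z.add_0_r.
  split; intros [Ha Ht]; split; auto.
  - rewrite Ht. reflexivity.
  - destruct (Ha 0%nat) as [_ Hs]; [lia|]. rewrite Z.add_0_r in Hs.
    destruct (h a); [congruence | contradiction].
Qed.

Definition rule_holds_at (W : nat) (nv : Z) (h : heap) (r : rule) (a : Z) : Prop :=
  tagged_block W nv h a (rule_tag r) ->
  Forall (atom_holds W (field_at h a) (field_at h a)) (rule_guard r) ->
  match rule_child r with
  | None => Forall (atom_holds W (field_at h a) (field_at h a)) (rule_concl r)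
  | Some (o, k) =>
      let p := a + field_at h a (clamp W o) in
      tagged_block W nv h p k /\ Forall (atom_holds W (field_at h a) (field_at h p)) (rule_concl r)
  end.

Definition ftag_is (t : term) (k : nat) : form := feq (TPlus t (numeral (S k))) TZero.

Definition fblock_reads (W : nat) (base : term) (s : nat) : form :=
  fconj (map (fun o => fpoints_to_in (TPlus base (numeral o)) (TVar (s + o))) (seq 0 W)).

Definition fblock_allocated (W : nat) (base : term) : form :=
  fconj (map (fun o => fallocated (TPlus base (numeral o))) (seq 0 W)).

Lemma sat_ftag_is nv e h t k : sat nv e h (ftag_is t k) <-> teval nv e t = tag k.
Proof. unfold ftag_is, tag. rewrite sat_feq. simpl. rewrite teval_numeral. lia. Qed.

Lemma sat_fblock_allocated W nv e h base :
  sat nv e h (fblock_allocated W base) <-> allocated_block W nv h (teval nv e base).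
Proof.
  unfold fblock_allocated, allocated_block. rewrite sat_fconj, Forall_map, Forall_forall.
  split; intros H o Ho.
  - assert (Hs := H o (proj2 (in_seq W 0 o) ltac:(lia))).
    rewrite sat_fallocated in Hs. simpl in Hs. rewrite teval_numeral in Hs. exact Hs.
  - apply in_seq in Ho. rewrite sat_fallocated. simpl. rewrite teval_numeral. apply H. lia.
Qed.

Lemma sat_fblock_reads W nv e h base s : finite_heap h ->
  sat nv e h (fblock_reads W base s) <->
  allocated_block W nv h (teval nv e base) /\
  forall o, (o < W)%nat -> e (s + o)%nat = field_at h (teval nv e base) o.
Proof.
  intros Hf. unfold fblock_reads, allocated_block, field_at, heap_val.
  rewrite sat_fconj, Forall_map, Forall_forall.
  setoid_rewrite sat_fpoints_to_in; [|exact Hf]. cbn [teval]. setoid_rewrite teval_numeral.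
  split.
  - intros H. split; intros o Ho; destruct (H o (proj2 (in_seq W 0 o) ltac:(lia))) as [H1 H2];
      rewrite ?H2; split || reflexivity; congruence.
  - intros [Ha He] o Ho. apply in_seq in Ho. destruct (Ha o ltac:(lia)) as [H1 H2].
    split; [exact H1|]. rewrite He by lia. destruct (h _); [reflexivity | contradiction].
Qed.

(* Variable 0 holds the input, variable 1 the address of the root record and variable 2 an
   arbitrary address [a]; the [W] variables from 3 on read the record at [a] and the [W]
   variables from [3 + W] on read the record it points to. *)
Definition tr_field (W zb : nat) (r : field) : term :=
  match r with Here o => TVar (3 + clamp W o) | Child o => TVar (zb + clamp W o) end.

Definition tr_atom (W zb : nat) (a : atom) : form :=
  match a with
  | AEq r1 c1 r2 c2 =>
      feq (TPlus (tr_field W zb r1) (numeral c1)) (TPlus (tr_field W zb r2) (numeral c2))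
  | AGe r c => FGe (tr_field W zb r) (numeral c)
  | AEqC r c => feq (tr_field W zb r) (numeral c)
  | AFalse => ffalse
  end.

Lemma sat_tr_atoms W zb nv e h l :
  sat nv e h (fconj (map (tr_atom W zb) l)) <->
  Forall (atom_holds W (fun o => e (3 + o)%nat) (fun o => e (zb + o)%nat)) l.
Proof.
  rewrite sat_fconj, Forall_map, !Forall_forall.
  split; intros H a Ha; specialize (H a Ha);
    destruct a as [[] c1 [] c2 | [] c | [] c |]; simpl in *; rewrite ?teval_numeral in *; lia.
Qed.

Definition rule_form (W : nat) (r : rule) : form :=
  fimp (fconj [fblock_reads W (TVar 2) 3; ftag_is (TVar 3) (rule_tag r);
               fconj (map (tr_atom W 3) (rule_guard r))])
    match rule_child r with
    | None => fconj (map (tr_atom W 3) (rule_concl r))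
    | Some (o, k) =>
        FAnd (fblock_allocated W (TPlus (TVar 2) (TVar (3 + clamp W o))))
          (fimp (fblock_reads W (TPlus (TVar 2) (TVar (3 + clamp W o))) (3 + W))
             (FAnd (ftag_is (TVar (3 + W)) k) (fconj (map (tr_atom W (3 + W)) (rule_concl r)))))
    end.

Definition root_form (W L k : nat) : form :=
  FAnd (fblock_allocated W (TVar 1))
    (fimp (fblock_reads W (TVar 1) (3 + W))
       (fconj [ftag_is (TVar (3 + W)) k; feq (TVar (3 + W + in_off 0)) (TVar 0);
               feq (TVar (3 + W + out_off L)) TZero])).

Definition computation_form (W L k : nat) (Rs : list rule) : form :=
  fconj (root_form W L k :: map (rule_form W) Rs).

Definition root_holds (W L : nat) (nv : Z) (h : heap) (x0 r : Z) (k : nat) : Prop :=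
  tagged_block W nv h r k /\ field_at h r (in_off 0) = x0 /\ field_at h r (out_off L) = 0.

Definition sat_for_all_fields (W : nat) (nv : Z) (e : env) (h : heap) (f : form) : Prop :=
  forall e', (forall i, (i < 2 \/ 3 + W + W <= i)%nat -> e' i = e i) -> sat nv e' h f.

Definition record_env (W : nat) (h : heap) (e : env) (a p : Z) : env := fun i =>
  if Nat.ltb i 2 then e i else if Nat.eqb i 2 then a else
  if Nat.ltb i (3 + W) then field_at h a (i - 3) else
  if Nat.ltb i (3 + W + W) then field_at h p (i - 3 - W) else e i.

Lemma record_env_outside W h e a p i :
  (i < 2 \/ 3 + W + W <= i)%nat -> record_env W h e a p i = e i.
Proof.
  intros Hi. unfold record_env. destruct (Nat.ltb_spec i 2); auto.
  destruct (Nat.eqb_spec i 2); [lia|]. destruct (Nat.ltb_spec i (3 + W)); [lia|].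
  destruct (Nat.ltb_spec i (3 + W + W)); [lia | auto].
Qed.

Lemma record_env_here W h e a p o :
  (o < W)%nat -> record_env W h e a p (3 + o)%nat = field_at h a o.
Proof.
  intros Ho. unfold record_env. destruct (Nat.ltb_spec (3 + o) 2); [lia|].
  destruct (Nat.eqb_spec (3 + o) 2); [lia|]. destruct (Nat.ltb_spec (3 + o) (3 + W)); [|lia].
  f_equal. lia.
Qed.

Lemma record_env_child W h e a p o :
  (o < W)%nat -> record_env W h e a p (3 + W + o)%nat = field_at h p o.
Proof.
  intros Ho. unfold record_env. destruct (Nat.ltb_spec (3 + W + o) 2); [lia|].
  destruct (Nat.eqb_spec (3 + W + o) 2); [lia|].
  destruct (Nat.ltb_spec (3 + W + o) (3 + W)); [lia|].
  destruct (Nat.ltb_spec (3 + W + o) (3 + W + W)); [|lia]. f_equal. lia.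
Qed.

Section RuleSemantics.
Variables (W : nat) (nv : Z) (h : heap).
Hypotheses (Hfin : finite_heap h) (HW : (1 <= W)%nat).

Lemma rule_holds_of_sat e r :
  sat_for_all_fields W nv e h (rule_form W r) -> forall a, rule_holds_at W nv h r a.
Proof.
  intros H a Htag Hg. rewrite tagged_block_iff in Htag by exact HW. destruct Htag as [Ha Ht].
  set (p := match rule_child r with Some (o, _) => a + field_at h a (clamp W o) | None => a end).
  set (e' := record_env W h e a p).
  assert (Hhere : forall o, (o < W)%nat -> e' (3 + o)%nat = field_at h a o)
    by (intros; apply record_env_here; auto).
  assert (Hchild : forall o, (o < W)%nat -> e' (3 + W + o)%nat = field_at h p o)
    by (intros; apply record_env_child; auto).
  specialize (H e' (record_env_outside W h e a p)).
  unfold rule_form in H. rewrite sat_fimp, sat_fconj in H.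
  rewrite !Forall_cons_iff, sat_fblock_reads, sat_ftag_is, sat_tr_atoms in H by exact Hfin.
  cbn [teval] in H. change (e' 2%nat) with a in H.
  assert (Ht' : e' 3%nat = tag (rule_tag r)) by (rewrite <- Ht; apply (Hhere 0%nat); lia).
  assert (Hg' : Forall (atom_holds W (fun o => e' (3 + o)%nat) (fun o => e' (3 + o)%nat))
                  (rule_guard r))
    by (revert Hg; apply Forall_atom_holds_ext; auto; intros; symmetry; apply Hhere; auto).
  specialize (H (conj (conj Ha Hhere) (conj Ht' (conj Hg' (Forall_nil _))))).
  destruct (rule_child r) as [[o k] |].
  - destruct H as [Hp H]. rewrite sat_fblock_allocated in Hp. cbn [teval] in Hp.
    rewrite Hhere in Hp by (unfold clamp; lia).
    rewrite sat_fimp, sat_fblock_reads in H by exact Hfin. cbn [teval] in H.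
    rewrite Hhere in H by (unfold clamp; lia).
    destruct (H (conj Hp Hchild)) as [Htp Hc]. rewrite sat_ftag_is, sat_tr_atoms in *.
    cbn [teval] in Htp. rewrite <- (Nat.add_0_r (3 + W)), Hchild in Htp by lia.
    split.
    + apply tagged_block_iff; auto.
    + revert Hc. apply Forall_atom_holds_ext; [exact HW | exact Hhere | exact Hchild].
  - rewrite sat_tr_atoms in H. revert H.
    apply Forall_atom_holds_ext; [exact HW | exact Hhere | exact Hhere].
Qed.

Lemma sat_of_rule_holds e r :
  (forall a, rule_holds_at W nv h r a) -> sat_for_all_fields W nv e h (rule_form W r).
Proof.
  intros H e' _. unfold rule_form. rewrite sat_fimp, sat_fconj, !Forall_cons_iff.
  rewrite sat_fblock_reads, sat_ftag_is, sat_tr_atoms by exact Hfin. cbn [teval].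
  intros ((Ha & Hhere) & Ht & Hg & _).
  set (a := e' 2%nat) in *.
  assert (Htag : tagged_block W nv h a (rule_tag r)).
  { apply tagged_block_iff; auto. split; [exact Ha|].
    rewrite <- Ht. symmetry. apply (Hhere 0%nat). lia. }
  assert (Hg' : Forall (atom_holds W (field_at h a) (field_at h a)) (rule_guard r)).
  { revert Hg. apply Forall_atom_holds_ext; [exact HW | exact Hhere | exact Hhere]. }
  specialize (H a Htag Hg'). destruct (rule_child r) as [[o k] |].
  - destruct H as [Htp Hc]. apply tagged_block_iff in Htp; auto. destruct Htp as [Hp Htp].
    split.
    + apply sat_fblock_allocated. cbn [teval]. rewrite Hhere by (unfold clamp; lia). exact Hp.
    + rewrite sat_fimp, sat_fblock_reads by exact Hfin. cbn [teval].
      rewrite Hhere by (unfold clamp; lia). intros [_ Hchild]. split.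
      * apply sat_ftag_is. cbn [teval]. rewrite <- (Nat.add_0_r (3 + W)), Hchild by lia.
        exact Htp.
      * apply sat_tr_atoms. revert Hc.
        apply Forall_atom_holds_ext; auto; intros; symmetry; auto.
  - apply sat_tr_atoms. revert H.
    apply Forall_atom_holds_ext; auto; intros; symmetry; apply Hhere; auto.
Qed.

Lemma root_holds_iff L e k : (L + 3 <= W)%nat ->
  sat_for_all_fields W nv e h (root_form W L k) <-> root_holds W L nv h (e 0%nat) (e 1%nat) k.
Proof.
  intros HL. unfold root_form, root_holds. split.
  - intros H. set (r := e 1%nat). set (e' := record_env W h e 0 r).
    specialize (H e' (record_env_outside W h e 0 r)).
    destruct H as [Hr H]. rewrite sat_fblock_allocated in Hr. cbn [teval] in Hr.
    rewrite sat_fimp, sat_fblock_reads in H by exact Hfin. cbn [teval] in H.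
    assert (Hchild : forall o, (o < W)%nat -> e' (3 + W + o)%nat = field_at h r o)
      by (intros; apply record_env_child; auto).
    specialize (H (conj Hr Hchild)).
    rewrite sat_fconj, !Forall_cons_iff, sat_ftag_is, !sat_feq in H.
    cbn [teval] in H. destruct H as (Ht & Hin & Hout & _).
    rewrite <- (Nat.add_0_r (3 + W)), Hchild in Ht by lia.
    rewrite !Hchild in Hin, Hout by (unfold in_off, out_off; lia).
    split; [apply tagged_block_iff; auto | split; auto].
  - intros (Htag & Hin & Hout) e' He. apply tagged_block_iff in Htag as [Hr Ht]; [|exact HW].
    rewrite <- !He in * by lia. split.
    + apply sat_fblock_allocated. exact Hr.
    + rewrite sat_fimp, sat_fblock_reads by exact Hfin. cbn [teval]. intros [_ Hchild].
      rewrite sat_fconj, !Forall_cons_iff, sat_ftag_is, !sat_feq. cbn [teval].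
      rewrite <- (Nat.add_0_r (3 + W)) at 1.
      rewrite !Hchild by (unfold in_off, out_off; lia). repeat constructor; auto.
Qed.

Lemma computation_form_iff L e k Rs : (L + 3 <= W)%nat ->
  sat_for_all_fields W nv e h (computation_form W L k Rs) <->
  root_holds W L nv h (e 0%nat) (e 1%nat) k /\
  forall r, In r Rs -> forall a, rule_holds_at W nv h r a.
Proof.
  intros HL. rewrite <- root_holds_iff by exact HL. unfold computation_form, sat_for_all_fields.
  setoid_rewrite sat_fconj. setoid_rewrite Forall_cons_iff. setoid_rewrite Forall_map.
  setoid_rewrite Forall_forall. split.
  - intros H. split.
    + intros e' He. apply (H e' He).
    + intros r Hr. apply (rule_holds_of_sat e). intros e' He. apply (H e' He), Hr.
  - intros [Hroot Hrules] e' He. split; [apply Hroot, He|].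
    intros r Hr. apply (sat_of_rule_holds e r (Hrules r Hr) e' He).
Qed.

End RuleSemantics.

(** * Soundness of the encoding *)

Definition nat_fields (h : heap) (a : Z) (offs : nat -> nat) (n : nat) : list nat :=
  map (fun i => Z.to_nat (field_at h a (offs i))) (seq 0 n).

Definition inputs_at (h : heap) (a : Z) (ar : nat) : list nat := nat_fields h a in_off ar.
Definition output_at (h : heap) (L : nat) (a : Z) : nat := Z.to_nat (field_at h a (out_off L)).

Lemma nat_fields_S h a offs n :
  nat_fields h a offs (S n) =
  Z.to_nat (field_at h a (offs 0%nat)) :: nat_fields h a (fun i => offs (S i)) n.
Proof. unfold nat_fields. simpl. rewrite <- seq_shift, map_map. reflexivity. Qed.

Lemma nat_fields_copy h a p src dst n :
  (forall i, (i < n)%nat -> field_at h p (dst i) = field_at h a (src i)) ->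
  nat_fields h p dst n = nat_fields h a src n.
Proof.
  intros H. unfold nat_fields. apply map_ext_in. intros i Hi. apply in_seq in Hi.
  rewrite H by lia. reflexivity.
Qed.

Lemma length_nat_fields h a offs n : length (nat_fields h a offs n) = n.
Proof. unfold nat_fields. rewrite length_map, length_seq. reflexivity. Qed.

Lemma nth_nat_fields h a offs n i : (i < n)%nat ->
  nth i (nat_fields h a offs n) 0%nat = Z.to_nat (field_at h a (offs i)).
Proof.
  intros Hi. unfold nat_fields.
  rewrite nth_indep with (d' := (fun i => Z.to_nat (field_at h a (offs i))) 0%nat)
    by (rewrite length_map, length_seq; exact Hi).
  rewrite (map_nth (fun i => Z.to_nat (field_at h a (offs i)))), seq_nth by exact Hi.
  reflexivity.
Qed.

Ltac offsets := unfold rec_width, in_off, out_off, ptr_off, aux_off in *; lia.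

Ltac simpl_atoms H :=
  cbn [atom_holds field_value] in H; rewrite ?clamp_id in H by offsets.

Ltac guard_holds :=
  repeat constructor; cbn [atom_holds field_value]; rewrite ?clamp_id by offsets; lia.

Section Soundness.
Variables (L : nat) (nds : list node) (nv : Z) (h : heap).
Hypotheses (Hclosed : closed_nodes nds) (Harity : arities_below L nds).
Hypothesis Hrules : forall D, In D nds -> forall r, In r (rules_of L nds D) ->
  forall a, rule_holds_at (rec_width L) nv h r a.

Notation W := (rec_width L).
Notation here a := (atom_holds W (field_at h a) (field_at h a)).

Definition child_at (a : Z) (j : nat) : Z := a + field_at h a (ptr_off L j).

Lemma fire_local D r a : In D nds -> In r (rules_of L nds D) -> rule_child r = None ->
  tagged_block W nv h a (node_index D nds) -> Forall (here a) (rule_guard r) ->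
  Forall (here a) (rule_concl r).
Proof.
  intros HD Hr Hc Ht Hg. pose proof (Hrules D HD r Hr a) as H. unfold rule_holds_at in H.
  rewrite Hc, (rule_tag_rules_of L nds D r Hr) in H. exact (H Ht Hg).
Qed.

Lemma fire_child D r a j k : In D nds -> In r (rules_of L nds D) ->
  rule_child r = Some (ptr_off L j, k) -> (j <= L)%nat ->
  tagged_block W nv h a (node_index D nds) -> Forall (here a) (rule_guard r) ->
  tagged_block W nv h (child_at a j) k /\
  Forall (atom_holds W (field_at h a) (field_at h (child_at a j))) (rule_concl r).
Proof.
  intros HD Hr Hc Hj Ht Hg. pose proof (Hrules D HD r Hr a) as H. unfold rule_holds_at in H.
  rewrite Hc, (rule_tag_rules_of L nds D r Hr), clamp_id in H by offsets.
  exact (H Ht Hg).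
Qed.

Definition certified (f : recf) : Prop := forall ar, In (Call, f, ar) nds -> forall a,
  tagged_block W nv h a (node_index (Call, f, ar) nds) ->
  reval f (inputs_at h a ar) (output_at h L a).

Lemma no_false_rule D a : In D nds ->
  In (mkRule (node_index D nds) [] None [AFalse]) (rules_of L nds D) ->
  tagged_block W nv h a (node_index D nds) -> False.
Proof.
  intros HD Hr Ht. exact (Forall_inv (fire_local D _ a HD Hr eq_refl Ht (Forall_nil _))).
Qed.

Lemma certified_zero : certified RZero.
Proof.
  intros ar HD a Ht.
  assert (Hc := fire_local _ _ a HD (or_introl eq_refl) eq_refl Ht (Forall_nil _)).
  apply Forall_inv in Hc. simpl_atoms Hc. unfold output_at. rewrite Hc. constructor.
Qed.

Lemma certified_succ : certified RSucc.
Proof.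
  intros [|ar] HD a Ht; [destruct (no_false_rule _ a HD (or_introl eq_refl) Ht)|].
  assert (Hc := fire_local _ _ a HD (or_introl eq_refl) eq_refl Ht (Forall_nil _)).
  apply Forall_cons_iff in Hc as [Hnn Hc]. apply Forall_inv in Hc.
  simpl_atoms Hnn. simpl_atoms Hc.
  unfold inputs_at, output_at. rewrite nat_fields_S.
  replace (Z.to_nat (field_at h a (out_off L))) with (S (Z.to_nat (field_at h a (in_off 0))))
    by lia.
  constructor.
Qed.

Lemma certified_proj i : certified (RProj i).
Proof.
  intros ar HD a Ht. pose proof (Harity _ HD) as Har. simpl in Har.
  pose proof (fun r Hr => fire_local _ r a HD Hr) as Hfire. unfold rules_of in Hfire.
  destruct (Nat.ltb_spec i ar) as [Hi | Hi];
    specialize (Hfire _ (or_introl eq_refl) eq_refl Ht (Forall_nil _));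
    apply Forall_inv in Hfire; [|contradiction].
  simpl_atoms Hfire. unfold inputs_at, output_at. apply reval_proj_nth.
  - rewrite length_nat_fields. exact Hi.
  - rewrite nth_nat_fields by exact Hi. f_equal. lia.
Qed.

Lemma certified_comp g gs : certified g -> Forall certified gs -> certified (RComp g gs).
Proof.
  intros IHg IHgs ar HD a Ht. destruct (Hclosed _ HD) as [Hg Hgs].
  pose proof (Harity _ HD) as HarD. pose proof (Harity _ Hg) as Harg. simpl in HarD, Harg.
  set (m := length gs) in *.
  destruct (fire_child _ _ a m _ HD (or_introl eq_refl) eq_refl ltac:(lia) Ht (Forall_nil _))
    as [Htg Hc].
  cbn [rule_concl] in Hc. rewrite Forall_app, Forall_copy_fields in Hc by offsets.
  destruct Hc as [Hin Hout]. apply Forall_inv in Hout. simpl_atoms Hout.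
  apply ev_comp with (ws := nat_fields h a (aux_off L) m).
  - apply revals_map_seq. intros j Hj.
    assert (Hgj : In (nth j gs RZero) gs) by (apply nth_In; exact Hj).
    assert (Hr : In (mkRule (node_index (Call, RComp g gs, ar) nds) []
                   (Some (ptr_off L j, node_index (Call, nth j gs RZero, ar) nds))
                   (copy_fields ar in_off in_off ++
                    [AEq (Child (out_off L)) 0 (Here (aux_off L j)) 0]))
                 (rules_of L nds (Call, RComp g gs, ar))).
    { apply in_cons, in_map_iff. exists j. split; [reflexivity | apply in_seq; lia]. }
    destruct (fire_child _ _ a j _ HD Hr eq_refl ltac:(lia) Ht (Forall_nil _)) as [Htj Hcj].
    cbn [rule_concl] in Hcj. rewrite Forall_app, Forall_copy_fields in Hcj by offsets.
    destruct Hcj as [Hinj Houtj]. apply Forall_inv in Houtj. simpl_atoms Houtj.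
    rewrite Forall_forall in IHgs. specialize (IHgs _ Hgj ar (Hgs _ Hgj) _ Htj).
    unfold inputs_at, output_at in IHgs. rewrite (nat_fields_copy h a _ in_off in_off) in IHgs
      by exact Hinj.
    replace (Z.to_nat (field_at h a (aux_off L j)))
      with (Z.to_nat (field_at h (child_at a j) (out_off L))) by (f_equal; lia).
    exact IHgs.
  - specialize (IHg m Hg _ Htg). unfold inputs_at, output_at in IHg.
    rewrite (nat_fields_copy h a _ (aux_off L) in_off) in IHg by exact Hin.
    unfold output_at. replace (Z.to_nat (field_at h a (out_off L)))
      with (Z.to_nat (field_at h (child_at a m) (out_off L))) by (f_equal; lia).
    exact IHg.
Qed.

Lemma prec_base_certified g1 g2 ar a : certified g1 -> In (Call, RPrec g1 g2, S ar) nds ->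
  tagged_block W nv h a (node_index (Call, RPrec g1 g2, S ar) nds) ->
  field_at h a (in_off 0) = 0 ->
  reval (RPrec g1 g2) (0%nat :: nat_fields h a (fun i => in_off (S i)) ar) (output_at h L a).
Proof.
  intros IH1 HD Ht H0. destruct (Hclosed _ HD) as [Hg1 _]. simpl in Hg1.
  pose proof (Harity _ HD) as HarD. simpl in HarD.
  assert (Hg : Forall (here a) [AEqC (Here (in_off 0)) 0]) by guard_holds.
  destruct (fire_child _ _ a 0 _ HD (or_intror (or_introl eq_refl)) eq_refl ltac:(lia) Ht Hg)
    as [Htc Hc].
  cbn [rule_concl] in Hc. rewrite Forall_app, Forall_copy_fields in Hc by offsets.
  destruct Hc as [Hin Hout]. apply Forall_inv in Hout. simpl_atoms Hout.
  specialize (IH1 ar Hg1 _ Htc). unfold inputs_at, output_at in IH1 |- *.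
  rewrite (nat_fields_copy h a _ (fun i => in_off (S i)) in_off) in IH1 by exact Hin.
  replace (Z.to_nat (field_at h a (out_off L)))
    with (Z.to_nat (field_at h (child_at a 0) (out_off L))) by (f_equal; lia).
  apply ev_prec0. exact IH1.
Qed.

Lemma prec_step_certified g1 g2 ar a n : certified g2 -> In (Call, RPrec g1 g2, S ar) nds ->
  tagged_block W nv h a (node_index (Call, RPrec g1 g2, S ar) nds) ->
  field_at h a (in_off 0) = Z.of_nat (S n) ->
  (forall p, tagged_block W nv h p (node_index (Call, RPrec g1 g2, S ar) nds) ->
     Z.to_nat (field_at h p (in_off 0)) = n ->
     reval (RPrec g1 g2) (n :: nat_fields h p (fun i => in_off (S i)) ar) (output_at h L p)) ->
  reval (RPrec g1 g2) (S n :: nat_fields h a (fun i => in_off (S i)) ar) (output_at h L a).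
Proof.
  intros IH2 HD Ht Hn Hprev. destruct (Hclosed _ HD) as [_ Hg2].
  pose proof (Harity _ HD) as HarD. pose proof (Harity _ Hg2) as Har2. simpl in HarD, Har2.
  assert (Hg : Forall (here a) [AGe (Here (in_off 0)) 1]) by guard_holds.
  destruct (fire_child _ _ a 0 _ HD (or_intror (or_intror (or_introl eq_refl)))
              eq_refl ltac:(lia) Ht Hg) as [Htp Hp].
  destruct (fire_child _ _ a 1 _ HD (or_intror (or_intror (or_intror (or_introl eq_refl))))
              eq_refl ltac:(lia) Ht Hg) as [Htq Hq].
  cbn [rule_concl] in Hp, Hq.
  rewrite Forall_cons_iff, Forall_app, Forall_copy_fields in Hp by offsets.
  rewrite !Forall_cons_iff, Forall_app, Forall_copy_fields in Hq by offsets.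
  destruct Hp as (Hp0 & Hpin & Hpout). destruct Hq as (Hq0 & Hq1 & Hqin & Hqout).
  apply Forall_inv in Hpout, Hqout. simpl_atoms Hp0. simpl_atoms Hpout.
  simpl_atoms Hq0. simpl_atoms Hq1. simpl_atoms Hqout.
  specialize (Hprev _ Htp ltac:(lia)).
  rewrite (nat_fields_copy h a _ (fun i => in_off (S i)) (fun i => in_off (S i))) in Hprev
    by exact Hpin.
  specialize (IH2 _ Hg2 _ Htq). unfold inputs_at, output_at in IH2, Hprev |- *.
  rewrite !nat_fields_S, (nat_fields_copy h a _ (fun i => in_off (S i))) in IH2 by exact Hqin.
  replace (Z.to_nat (field_at h (child_at a 1) (in_off 0))) with n in IH2 by lia.
  replace (Z.to_nat (field_at h (child_at a 1) (in_off 1)))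
    with (Z.to_nat (field_at h (child_at a 0) (out_off L))) in IH2 by (f_equal; lia).
  replace (Z.to_nat (field_at h (child_at a 1) (out_off L)))
    with (Z.to_nat (field_at h a (out_off L))) in IH2 by (f_equal; lia).
  eapply ev_precS; [exact Hprev | exact IH2].
Qed.

Lemma certified_prec g1 g2 : certified g1 -> certified g2 -> certified (RPrec g1 g2).
Proof.
  intros IH1 IH2 [|ar] HD; intros a Ht; [destruct (no_false_rule _ a HD (or_introl eq_refl) Ht)|].
  unfold inputs_at. rewrite nat_fields_S.
  remember (Z.to_nat (field_at h a (in_off 0))) as n eqn:Hn. revert a Ht Hn.
  induction n as [|n IHn]; intros a Ht Hn;
    assert (Hnn := fire_local _ _ a HD (or_introl eq_refl) eq_refl Ht (Forall_nil _));
    apply Forall_inv in Hnn; simpl_atoms Hnn.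
  - apply prec_base_certified; auto. lia.
  - apply prec_step_certified; auto. lia.
Qed.

Lemma search_certified g ar : certified g -> In (Search, g, ar) nds -> forall a,
  tagged_block W nv h a (node_index (Search, g, ar) nds) ->
  forall k, (k < output_at h L a)%nat -> exists r, reval g (k :: inputs_at h a ar) (S r).
Proof.
  intros IH HD. pose proof (Hclosed _ HD) as Hg. simpl in Hg.
  pose proof (Harity _ HD) as HarD. pose proof (Harity _ Hg) as Harg. simpl in HarD, Harg.
  intros a Ht. unfold output_at.
  remember (Z.to_nat (field_at h a (out_off L))) as c eqn:Hc. revert a Ht Hc.
  induction c as [|c IHc]; intros a Ht Hc k Hk; [lia|].
  assert (Hg' : Forall (here a) [AGe (Here (out_off L)) 1]) by guard_holds.
  destruct (fire_child _ _ a 0 _ HD (or_introl eq_refl) eq_refl ltac:(lia) Ht Hg') as [Htp Hp].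
  destruct (fire_child _ _ a 1 _ HD (or_intror (or_introl eq_refl)) eq_refl ltac:(lia) Ht Hg')
    as [Htq Hq].
  cbn [rule_concl] in Hp, Hq.
  rewrite Forall_cons_iff, Forall_app, Forall_copy_fields in Hp by offsets.
  rewrite Forall_app, Forall_copy_fields in Hq by offsets.
  destruct Hp as (Hp0 & Hpin & Hpout). destruct Hq as (Hqin & Hqout).
  apply Forall_inv in Hpout, Hqout. simpl_atoms Hp0. simpl_atoms Hpout. simpl_atoms Hqout.
  destruct (Nat.eq_dec k c) as [-> | Hkc].
  - specialize (IH _ Hg _ Htp). unfold inputs_at, output_at in IH.
    rewrite nat_fields_S, (nat_fields_copy h a _ in_off (fun i => in_off (S i))) in IH
      by exact Hpin.
    exists (Nat.pred (Z.to_nat (field_at h (child_at a 0) (out_off L)))).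
    replace c with (Z.to_nat (field_at h (child_at a 0) (in_off 0))) by lia.
    rewrite Nat.succ_pred_pos by lia. exact IH.
  - destruct (IHc _ Htq ltac:(lia) k ltac:(lia)) as [r Hr]. exists r.
    unfold inputs_at in *. rewrite (nat_fields_copy h a _ in_off in_off) in Hr by exact Hqin.
    exact Hr.
Qed.

Lemma certified_mu g : certified g -> certified (RMu g).
Proof.
  intros IH ar HD a Ht. destruct (Hclosed _ HD) as [Hg Hs].
  pose proof (Harity _ HD) as HarD. pose proof (Harity _ Hg) as Harg. simpl in HarD, Harg.
  destruct (fire_child _ _ a 0 _ HD (or_introl eq_refl) eq_refl ltac:(lia) Ht (Forall_nil _))
    as [Htp Hp].
  destruct (fire_child _ _ a 1 _ HD (or_intror (or_introl eq_refl)) eq_refl ltac:(lia) Ht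
              (Forall_nil _)) as [Htq Hq].
  cbn [rule_concl] in Hp, Hq.
  rewrite Forall_cons_iff, Forall_app, Forall_copy_fields in Hp by offsets.
  rewrite Forall_app, Forall_copy_fields in Hq by offsets.
  destruct Hp as (Hp0 & Hpin & Hpout). destruct Hq as (Hqin & Hqout).
  apply Forall_inv in Hpout, Hqout. simpl_atoms Hp0. simpl_atoms Hpout. simpl_atoms Hqout.
  constructor.
  - specialize (IH _ Hg _ Htp). unfold inputs_at, output_at in IH.
    rewrite nat_fields_S, (nat_fields_copy h a _ in_off (fun i => in_off (S i))) in IH
      by exact Hpin.
    unfold output_at. rewrite Hpout in IH.
    replace (Z.to_nat (field_at h a (out_off L)))
      with (Z.to_nat (field_at h (child_at a 0) (in_off 0))) by (f_equal; lia).
    exact IH.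
  - intros k Hk. destruct (search_certified g ar IH Hs _ Htq k) as [r Hr].
    + unfold output_at. replace (field_at h (child_at a 1) (out_off L))
        with (field_at h a (out_off L)) by lia. exact Hk.
    + exists r. unfold inputs_at in *.
      rewrite (nat_fields_copy h a _ in_off in_off) in Hr by exact Hqin. exact Hr.
Qed.

Lemma certified_all f : certified f.
Proof.
  induction f using recf_nested_ind.
  - apply certified_zero.
  - apply certified_succ.
  - apply certified_proj.
  - apply certified_comp; assumption.
  - apply certified_prec; assumption.
  - apply certified_mu; assumption.
Qed.

End Soundness.

(** * Completeness of the encoding *)

Definition list_heap (H : list Z) : heap :=
  fun a => if Z_lt_dec a 0 then None else nth_error H (Z.to_nat a).

Lemma finite_list_heap H : finite_heap (list_heap H).
Proof.
  exists (map Z.of_nat (seq 0 (length H))). intros x Hx. unfold list_heap in Hx.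
  destruct (Z_lt_dec x 0); [congruence|]. apply in_map_iff. exists (Z.to_nat x).
  split; [lia|]. apply in_seq. apply nth_error_Some in Hx. lia.
Qed.

Lemma field_at_list_heap H n o : field_at (list_heap H) (Z.of_nat n) o = nth (n + o) H 0.
Proof.
  unfold field_at, heap_val, list_heap. destruct (Z_lt_dec _ 0); [lia|].
  replace (Z.to_nat (Z.of_nat n + Z.of_nat o)) with (n + o)%nat by lia.
  destruct (nth_error H (n + o)) eqn:E.
  - symmetry. apply nth_error_nth. exact E.
  - apply nth_error_None in E. rewrite nth_overflow; auto.
Qed.

Lemma list_heap_some H n : (n < length H)%nat -> list_heap H (Z.of_nat n) = Some (nth n H 0).
Proof.
  intros Hn. unfold list_heap. destruct (Z_lt_dec _ 0); [lia|]. rewrite Nat2Z.id.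
  apply nth_error_nth'. exact Hn.
Qed.

(* The interpretation of [nil] is [-1]: every cell of a list heap is a legal address. *)
Lemma allocated_block_list_heap W H a : (1 <= W)%nat ->
  allocated_block W (-1) (list_heap H) a <-> 0 <= a /\ a + Z.of_nat W <= Z.of_nat (length H).
Proof.
  intros HW. unfold allocated_block, list_heap. split.
  - intros Ha. destruct (Ha 0%nat) as [_ E]; [lia|]. rewrite Z.add_0_r in E.
    destruct (Z_lt_dec a 0); [congruence|]. split; [lia|].
    destruct (Ha (W - 1)%nat) as [_ E2]; [lia|].
    destruct (Z_lt_dec _ 0); [congruence|]. apply nth_error_Some in E2. lia.
  - intros [H1 H2] o Ho. split; [lia|]. destruct (Z_lt_dec _ 0); [lia|].
    apply nth_error_Some. lia.
Qed.

Lemma tagged_block_list_heap W H n k : (1 <= W)%nat ->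
  tagged_block W (-1) (list_heap H) (Z.of_nat n) k <->
  (n + W <= length H)%nat /\ nth n H 0 = tag k.
Proof.
  intros HW. unfold tagged_block. rewrite allocated_block_list_heap by exact HW.
  split.
  - intros [Ha Ht]. rewrite list_heap_some in Ht by lia. injection Ht. lia.
  - intros [Hn Ht]. rewrite list_heap_some by lia. split; [lia | congruence].
Qed.

Section Consistency.
Variables (L : nat) (nds : list node).
Notation W := (rec_width L).

(* Tags are the only negative values in the heaps built below, so a negative cell marks the
   start of a record. *)
Definition consistent (H : list Z) : Prop :=
  forall i, (i < length H)%nat -> nth i H 0 < 0 ->
    (i + W <= length H)%nat /\ exists D, In D nds /\ nth i H 0 = tag (node_index D nds) /\
      forall r, In r (rules_of L nds D) -> rule_holds_at W (-1) (list_heap H) r (Z.of_nat i).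

Lemma rules_hold_of_consistent H : consistent H ->
  forall D, In D nds -> forall r, In r (rules_of L nds D) ->
  forall a, rule_holds_at W (-1) (list_heap H) r a.
Proof.
  intros HV D HD r Hr a Ht. pose proof Ht as Ht'.
  destruct Ht as [Ha _]. apply allocated_block_list_heap in Ha as [Ha0 _]; [|unfold rec_width; lia].
  rewrite <- (Z2Nat.id a) in Ht' |- * by exact Ha0.
  apply tagged_block_list_heap in Ht' as [Hlen Htag]; [|unfold rec_width; lia].
  destruct (HV (Z.to_nat a)) as [_ (D' & HD' & Et & Hr')]; [unfold rec_width in Hlen; lia | |].
  - rewrite Htag. unfold tag. lia.
  - rewrite Htag, (rule_tag_rules_of L nds D r Hr) in Et. unfold tag in Et.
    assert (D' = D) by (apply (node_index_inj D' D nds HD' HD); lia). subst D'.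
    apply Hr'; [exact Hr|].
    apply tagged_block_list_heap; [unfold rec_width; lia|]. split; [exact Hlen | exact Htag].
Qed.

Lemma rule_holds_at_app r A small B i :
  (i + W <= length small)%nat ->
  rule_holds_at W (-1) (list_heap small) r (Z.of_nat i) ->
  rule_holds_at W (-1) (list_heap (A ++ small ++ B)) r (Z.of_nat (length A + i)).
Proof.
  intros Hi Hs. unfold rule_holds_at in *. intros Ht Hg.
  assert (HW : (1 <= W)%nat) by (unfold rec_width; lia).
  assert (Hemb : forall x, (x < length small)%nat ->
            nth (length A + x) (A ++ small ++ B) 0 = nth x small 0).
  { intros x Hx. rewrite app_nth2, Nat.add_comm, Nat.add_sub, app_nth1 by lia. reflexivity. }
  assert (Hfld : forall o, (o < W)%nat ->
            field_at (list_heap (A ++ small ++ B)) (Z.of_nat (length A + i)) o =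
            field_at (list_heap small) (Z.of_nat i) o).
  { intros o Ho. rewrite !field_at_list_heap, <- Nat.add_assoc. apply Hemb. lia. }
  assert (Ht' : tagged_block W (-1) (list_heap small) (Z.of_nat i) (rule_tag r)).
  { apply tagged_block_list_heap in Ht as [_ Ht]; [|exact HW].
    apply tagged_block_list_heap; [exact HW|]. rewrite <- Hemb by lia. split; auto. }
  assert (Hg' := Forall_atom_holds_ext W _ _ _ _ _ HW Hfld Hfld Hg).
  specialize (Hs Ht' Hg'). destruct (rule_child r) as [[o k] |].
  - destruct Hs as [Htp Hc]. rewrite Hfld by (unfold clamp; lia).
    set (ps := Z.of_nat i + field_at (list_heap small) (Z.of_nat i) (clamp W o)) in *.
    assert (Hps : 0 <= ps) by (apply (allocated_block_list_heap W small ps HW), Htp).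
    replace (Z.of_nat (length A + i) + field_at (list_heap small) (Z.of_nat i) (clamp W o))
      with (Z.of_nat (length A + Z.to_nat ps)) by (unfold ps in *; lia).
    rewrite <- (Z2Nat.id ps) in Htp, Hc by exact Hps.
    apply tagged_block_list_heap in Htp as [Hlen Htag]; [|exact HW].
    split.
    + apply tagged_block_list_heap; [exact HW|]. rewrite length_app, length_app, Hemb by lia.
      split; [lia | exact Htag].
    + revert Hc. apply Forall_atom_holds_ext; [exact HW | |]; intros o' Ho'; symmetry.
      * apply Hfld, Ho'.
      * rewrite !field_at_list_heap, <- Nat.add_assoc. apply Hemb. lia.
  - revert Hs. apply Forall_atom_holds_ext; [exact HW | |]; intros; symmetry; apply Hfld; auto.
Qed.

Lemma consistent_embed A small B : consistent small ->
  forall i, (i < length small)%nat -> nth i small 0 < 0 ->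
  let H := A ++ small ++ B in
  (length A + i + W <= length H)%nat /\ exists D, In D nds /\
    nth (length A + i) H 0 = tag (node_index D nds) /\
    forall r, In r (rules_of L nds D) ->
      rule_holds_at W (-1) (list_heap H) r (Z.of_nat (length A + i)).
Proof.
  intros HV i Hi Hn H. destruct (HV i Hi Hn) as [Hw (D & HD & Et & Hr)].
  split; [unfold H; rewrite !length_app; lia|]. exists D. split; [exact HD|]. split.
  - unfold H. rewrite app_nth2, Nat.add_comm, Nat.add_sub, app_nth1 by lia. exact Et.
  - intros r Hr'. apply rule_holds_at_app; auto.
Qed.

Lemma consistent_app A B : consistent A -> consistent B -> consistent (A ++ B).
Proof.
  intros HA HB i Hi Hn. rewrite length_app in Hi.
  destruct (Nat.lt_ge_cases i (length A)) as [HiA | HiA].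
  - rewrite app_nth1 in Hn by exact HiA.
    pose proof (consistent_embed [] A B HA i HiA Hn) as HE. exact HE.
  - rewrite app_nth2 in Hn by exact HiA.
    pose proof (consistent_embed A B [] HB (i - length A) ltac:(lia) Hn) as HE.
    rewrite app_nil_r in HE. replace (length A + (i - length A))%nat with i in HE by lia.
    exact HE.
Qed.

Lemma consistent_concat Hs : (forall H, In H Hs -> consistent H) -> consistent (concat Hs).
Proof.
  induction Hs as [|H0 Hs IH]; simpl; intros HV.
  - intros i Hi. simpl in Hi. lia.
  - apply consistent_app; auto.
Qed.

Lemma consistent_record D R C : In D nds -> length R = W -> nth 0 R 0 = tag (node_index D nds) ->
  (forall k, (0 < k)%nat -> 0 <= nth k R 0) -> consistent C ->
  (forall r, In r (rules_of L nds D) -> rule_holds_at W (-1) (list_heap (R ++ C)) r 0) ->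
  consistent (R ++ C).
Proof.
  intros HD HR Ht Hnn HC Hrules i Hi Hn. rewrite length_app in Hi.
  destruct (Nat.lt_ge_cases i (length R)) as [HiR | HiR].
  - rewrite app_nth1 in Hn by exact HiR. destruct i as [|i].
    + split; [rewrite length_app; lia|]. exists D. split; [exact HD|].
      split; [rewrite app_nth1 by lia; exact Ht | exact Hrules].
    + specialize (Hnn (S i) ltac:(lia)). lia.
  - rewrite app_nth2 in Hn by exact HiR.
    pose proof (consistent_embed R C [] HC (i - length R) ltac:(lia) Hn) as HE.
    rewrite app_nil_r in HE. replace (length R + (i - length R))%nat with i in HE by lia.
    exact HE.
Qed.

End Consistency.

Definition padn (n : nat) (l : list nat) : list nat := firstn n (l ++ repeat 0%nat n).

Definition record (L t : nat) (ins : list nat) (out : nat) (ptrs aux : list nat) : list Z :=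
  tag t :: map Z.of_nat (padn L ins ++ [out] ++ padn (S L) ptrs ++ padn L aux).

Lemma length_padn n l : length (padn n l) = n.
Proof. unfold padn. rewrite length_firstn, length_app, repeat_length. lia. Qed.

Lemma nth_padn n l i : (i < n)%nat -> nth i (padn n l) 0%nat = nth i l 0%nat.
Proof.
  intros Hi. unfold padn. rewrite nth_firstn. destruct (Nat.ltb_spec i n); [|lia].
  destruct (Nat.lt_ge_cases i (length l)).
  - rewrite app_nth1; auto.
  - rewrite app_nth2, nth_repeat, nth_overflow; auto.
Qed.

Lemma nth_map_of_nat l k : nth k (map Z.of_nat l) 0 = Z.of_nat (nth k l 0%nat).
Proof. revert k; induction l; intros [|k]; simpl; auto. Qed.

Section Records.
Variables (L t : nat) (ins : list nat) (out : nat) (ptrs aux : list nat).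
Notation R := (record L t ins out ptrs aux).

Lemma length_record : length R = rec_width L.
Proof.
  unfold record, rec_width. cbn [length].
  rewrite length_map, !length_app, !length_padn. cbn [length]. lia.
Qed.

Lemma nth_record_in i : (i < L)%nat -> nth (in_off i) R 0 = Z.of_nat (nth i ins 0%nat).
Proof.
  intros Hi. unfold record, in_off. cbn [nth]. rewrite nth_map_of_nat.
  rewrite app_nth1 by (rewrite length_padn; exact Hi). rewrite nth_padn; auto.
Qed.

Lemma nth_record_out : nth (out_off L) R 0 = Z.of_nat out.
Proof.
  unfold record, out_off. cbn [nth]. rewrite nth_map_of_nat.
  rewrite app_nth2 by (rewrite length_padn; auto). rewrite length_padn, Nat.sub_diag. reflexivity.
Qed.

Lemma nth_record_ptr j : (j <= L)%nat -> nth (ptr_off L j) R 0 = Z.of_nat (nth j ptrs 0%nat).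
Proof.
  intros Hj. unfold record, ptr_off. replace (L + 2 + j)%nat with (S (L + S j)) by lia.
  cbn [nth]. rewrite nth_map_of_nat, app_nth2 by (rewrite length_padn; lia).
  rewrite length_padn. replace (L + S j - L)%nat with (S j) by lia. cbn [app nth].
  rewrite app_nth1 by (rewrite length_padn; lia). rewrite nth_padn; auto. lia.
Qed.

Lemma nth_record_aux j : (j < L)%nat -> nth (aux_off L j) R 0 = Z.of_nat (nth j aux 0%nat).
Proof.
  intros Hj. unfold record, aux_off. replace (2 * L + 3 + j)%nat with (S (L + S (S L + j))) by lia.
  cbn [nth]. rewrite nth_map_of_nat, app_nth2 by (rewrite length_padn; lia).
  rewrite length_padn. replace (L + S (S L + j) - L)%nat with (S (S L + j)) by lia.
  cbn [app nth]. rewrite app_nth2 by (rewrite length_padn; lia).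
  rewrite length_padn. replace (S L + j - S L)%nat with j by lia. rewrite nth_padn; auto.
Qed.

Lemma nth_record_nonneg k : (0 < k)%nat -> 0 <= nth k R 0.
Proof. intros Hk. destruct k; [lia|]. unfold record. cbn [nth]. rewrite nth_map_of_nat. lia. Qed.

End Records.

Definition offset (Hs : list (list Z)) (j : nat) : nat := list_sum (map (@length Z) (firstn j Hs)).

Lemma nth_concat_offset Hs j z : (j < length Hs)%nat -> (z < length (nth j Hs []))%nat ->
  nth (offset Hs j + z) (concat Hs) 0 = nth z (nth j Hs []) 0.
Proof.
  revert j. induction Hs as [|H0 Hs IH]; intros j Hj Hz; simpl in *; [lia|].
  destruct j as [|j]; unfold offset in *; simpl in *.
  - rewrite app_nth1 by exact Hz. reflexivity.
  - rewrite app_nth2 by lia. rewrite <- IH by lia. f_equal. lia.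
Qed.

Lemma offset_bound Hs j : (j < length Hs)%nat ->
  (offset Hs j + length (nth j Hs []) <= length (concat Hs))%nat.
Proof.
  revert j. induction Hs as [|H0 Hs IH]; intros j Hj; simpl in *; [lia|].
  destruct j as [|j]; unfold offset in *; simpl in *; rewrite length_app; [lia|].
  specialize (IH j ltac:(lia)). lia.
Qed.

(* A node with children [Hs] is stored as its record followed by the children's heaps; the
   pointers are relative to the record. *)
Definition ptrs_of (L : nat) (Hs : list (list Z)) : list nat :=
  map (fun j => (rec_width L + offset Hs j)%nat) (seq 0 (length Hs)).

Lemma nth_ptrs_of L Hs j : (j < length Hs)%nat ->
  nth j (ptrs_of L Hs) 0%nat = (rec_width L + offset Hs j)%nat.
Proof.
  intros Hj. unfold ptrs_of.
  rewrite nth_indep with (d' := (fun j => (rec_width L + offset Hs j)%nat) 0%nat)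
    by (rewrite length_map, length_seq; exact Hj).
  rewrite (map_nth (fun j => (rec_width L + offset Hs j)%nat)), seq_nth by exact Hj.
  reflexivity.
Qed.

Definition node_heap (L t : nat) (ins : list nat) (out : nat) (aux : list nat)
  (Hs : list (list Z)) : list Z :=
  record L t ins out (ptrs_of L Hs) aux ++ concat Hs.

Definition cells (H : list Z) (o : nat) : Z := nth o H 0.

Section RootRules.
Variables (L t : nat) (ins : list nat) (out : nat) (aux : list nat) (Hs : list (list Z)).
Notation W := (rec_width L).
Notation R := (record L t ins out (ptrs_of L Hs) aux).
Notation H := (node_heap L t ins out aux Hs).

Lemma field_at_node_heap_root o : (o < W)%nat -> field_at (list_heap H) 0 o = cells R o.
Proof.
  intros Ho. change 0 with (Z.of_nat 0). rewrite field_at_list_heap. unfold node_heap, cells.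
  rewrite app_nth1 by (rewrite length_record; exact Ho). reflexivity.
Qed.

Lemma root_rule_local r : rule_child r = None ->
  (Forall (atom_holds W (cells R) (cells R)) (rule_guard r) ->
   Forall (atom_holds W (cells R) (cells R)) (rule_concl r)) ->
  rule_holds_at W (-1) (list_heap H) r 0.
Proof.
  intros Hc Himp _ Hg. rewrite Hc. assert (HW : (1 <= W)%nat) by (unfold rec_width; lia).
  pose proof field_at_node_heap_root as E.
  assert (E' : forall o, (o < W)%nat -> cells R o = field_at (list_heap H) 0 o)
    by (intros; symmetry; auto).
  apply (Forall_atom_holds_ext W (cells R) (cells R)); auto.
  apply Himp. revert Hg. apply Forall_atom_holds_ext; auto.
Qed.

Lemma root_rule_vacuous r :
  (Forall (atom_holds W (cells R) (cells R)) (rule_guard r) -> False) ->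
  rule_holds_at W (-1) (list_heap H) r 0.
Proof.
  intros Hfalse _ Hg. exfalso. apply Hfalse. revert Hg.
  apply Forall_atom_holds_ext; [unfold rec_width; lia | |]; apply field_at_node_heap_root.
Qed.

Lemma root_rule_child r j k Hc : (j < length Hs)%nat -> (j <= L)%nat -> nth j Hs [] = Hc ->
  rule_child r = Some (ptr_off L j, k) -> (W <= length Hc)%nat -> nth 0 Hc 0 = tag k ->
  (Forall (atom_holds W (cells R) (cells R)) (rule_guard r) ->
   Forall (atom_holds W (cells R) (cells Hc)) (rule_concl r)) ->
  rule_holds_at W (-1) (list_heap H) r 0.
Proof.
  intros Hj HjL <- Hr HWj Htj Himp _ Hg. rewrite Hr.
  assert (HW : (1 <= W)%nat) by (unfold rec_width; lia).
  pose proof field_at_node_heap_root as E.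
  assert (Hg' : Forall (atom_holds W (cells R) (cells R)) (rule_guard r))
    by (revert Hg; apply Forall_atom_holds_ext; auto).
  specialize (Himp Hg').
  assert (Hemb : forall z, (z < length (nth j Hs []))%nat ->
            nth (W + offset Hs j + z) H 0 = nth z (nth j Hs []) 0).
  { intros z Hz. unfold node_heap. rewrite app_nth2 by (rewrite length_record; lia).
    rewrite length_record. replace (W + offset Hs j + z - W)%nat with (offset Hs j + z)%nat by lia.
    apply nth_concat_offset; auto. }
  assert (Hlen : (W + offset Hs j + length (nth j Hs []) <= length H)%nat).
  { unfold node_heap. rewrite length_app, length_record. pose proof (offset_bound Hs j Hj). lia. }
  rewrite clamp_id, E by (unfold ptr_off, rec_width; lia). unfold cells.
  rewrite nth_record_ptr, nth_ptrs_of by assumption.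
  replace (0 + Z.of_nat (W + offset Hs j)) with (Z.of_nat (W + offset Hs j)) by lia.
  split.
  - apply tagged_block_list_heap; [exact HW|]. split; [lia|].
    rewrite <- (Nat.add_0_r (W + offset Hs j)), Hemb by lia. exact Htj.
  - revert Himp. apply Forall_atom_holds_ext; [exact HW | |]; intros o Ho.
    + symmetry. apply E, Ho.
    + rewrite field_at_list_heap, Hemb by lia. reflexivity.
Qed.

End RootRules.

Lemma finite_choice {A} (d : A) (P : nat -> A -> Prop) m :
  (forall j, (j < m)%nat -> exists x, P j x) ->
  exists l, length l = m /\ forall j, (j < m)%nat -> P j (nth j l d).
Proof.
  induction m as [|m IH]; intros H.
  - exists []. split; [reflexivity | intros; lia].
  - destruct IH as (l & Hl & Hp); [intros j Hj; apply H; lia|].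
    destruct (H m ltac:(lia)) as (x & Hx). exists (l ++ [x]).
    split; [rewrite length_app; simpl; lia|]. intros j Hj.
    destruct (Nat.eq_dec j m) as [-> | Hjm].
    + rewrite app_nth2, Hl, Nat.sub_diag by lia. exact Hx.
    + rewrite app_nth1 by lia. apply Hp. lia.
Qed.

Section Completeness.
Variables (L : nat) (nds : list node).
Hypotheses (Hclosed : closed_nodes nds) (Harity : arities_below L nds).
Notation W := (rec_width L).

Definition represents (H : list Z) (D : node) (v : list nat) (y : nat) : Prop :=
  consistent L nds H /\ (W <= length H)%nat /\ nth 0 H 0 = tag (node_index D nds) /\
  (forall i, (i < length v)%nat -> nth (in_off i) H 0 = Z.of_nat (nth i v 0%nat)) /\
  nth (out_off L) H 0 = Z.of_nat y.

Lemma represents_node_heap D ins out aux Hs : In D nds -> (length ins < L)%nat ->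
  Forall (consistent L nds) Hs ->
  (forall r, In r (rules_of L nds D) ->
     rule_holds_at W (-1) (list_heap (node_heap L (node_index D nds) ins out aux Hs)) r 0) ->
  represents (node_heap L (node_index D nds) ins out aux Hs) D ins out.
Proof.
  intros HD Hl HV Hr. unfold node_heap.
  assert (HR := length_record L (node_index D nds) ins out (ptrs_of L Hs) aux).
  split; [|split; [|split; [|split]]].
  - apply consistent_record with (D := D); auto.
    + intros; apply nth_record_nonneg; auto.
    + apply consistent_concat. apply Forall_forall, HV.
  - rewrite length_app. lia.
  - reflexivity.
  - intros i Hi. rewrite app_nth1 by (unfold rec_width, in_off in *; lia).
    apply nth_record_in. lia.
  - rewrite app_nth1 by (unfold rec_width, out_off in *; lia). apply nth_record_out.
Qed.

Definition realizable (f : recf) (v : list nat) (y : nat) : Prop :=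
  In (Call, f, length v) nds -> exists H, represents H (Call, f, length v) v y.

Ltac eval_cells :=
  unfold cells; repeat first
    [ rewrite nth_record_in by offsets | rewrite nth_record_out
    | rewrite nth_record_aux by offsets ].

Ltac local_atoms_hold := repeat constructor; cbn [atom_holds field_value];
  rewrite ?clamp_id by offsets; eval_cells; simpl; lia.

Ltac child_atoms Ri Ro :=
  intros _; repeat (apply Forall_cons || apply Forall_nil || (apply Forall_app; split));
  try (rewrite Forall_copy_fields by offsets; intros ?i ?Hi);
  cbn [atom_holds field_value]; rewrite ?clamp_id by offsets;
  unfold cells; rewrite ?Ri, ?Ro by (simpl; lia); eval_cells; simpl; lia.

Ltac all_consistent := repeat (apply Forall_cons; [assumption|]); apply Forall_nil.

Ltac guard_fails := let Hg := fresh "Hg" in intros Hg; apply Forall_inv in Hg; revert Hg;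
  cbn [atom_holds field_value]; rewrite ?clamp_id by offsets; eval_cells; simpl; lia.

Lemma realizable_zero v : realizable RZero v 0.
Proof.
  intros HD. pose proof (Harity _ HD) as Har. simpl in Har.
  eexists. apply represents_node_heap with (aux := []) (Hs := []); auto.
  intros r [<- | []]. apply root_rule_local; [reflexivity|]. intros _. local_atoms_hold.
Qed.

Lemma realizable_succ x v : realizable RSucc (x :: v) (S x).
Proof.
  intros HD. pose proof (Harity _ HD) as Har. simpl in Har.
  eexists. apply represents_node_heap with (aux := []) (Hs := []); auto.
  intros r [<- | []]. apply root_rule_local; [reflexivity|]. intros _. local_atoms_hold.
Qed.

Lemma realizable_proj i v : (i < length v)%nat -> realizable (RProj i) v (nth i v 0%nat).
Proof.
  intros Hi HD. pose proof (Harity _ HD) as Har. simpl in Har.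
  eexists. apply represents_node_heap with (aux := []) (Hs := []); auto.
  intros r Hr. cbn [rules_of] in Hr. destruct (Nat.ltb_spec i (length v)); [|lia].
  destruct Hr as [<- | []]. apply root_rule_local; [reflexivity|]. intros _. local_atoms_hold.
Qed.

Lemma realizable_comp f gs v ws y : length ws = length gs ->
  (forall j, (j < length gs)%nat -> realizable (nth j gs RZero) v (nth j ws 0%nat)) ->
  realizable f ws y -> realizable (RComp f gs) v y.
Proof.
  intros Hlw Hgs Hf HD. destruct (Hclosed _ HD) as [HDf HDgs].
  pose proof (Harity _ HD) as HarD. pose proof (Harity _ HDf) as Harf. simpl in HarD, Harf.
  destruct (Hf ltac:(rewrite Hlw; exact HDf)) as [Hfr (Cf & Wf & Tf & If & Of)].
  rewrite Hlw in Tf, If.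
  destruct (finite_choice [] (fun j H => represents H (Call, nth j gs RZero, length v) v
                                           (nth j ws 0%nat)) (length gs)) as (Hl & Hll & Rl).
  { intros j Hj. apply Hgs; [exact Hj|]. apply HDgs, nth_In, Hj. }
  set (Hs := Hl ++ [Hfr]).
  assert (HsL : length Hs = S (length gs)) by (unfold Hs; rewrite length_app; simpl; lia).
  assert (Hsj : forall j, (j < length gs)%nat -> nth j Hs [] = nth j Hl [])
    by (intros; unfold Hs; apply app_nth1; lia).
  assert (Hsm : nth (length gs) Hs [] = Hfr)
    by (unfold Hs; rewrite app_nth2, Hll, Nat.sub_diag by lia; reflexivity).
  exists (node_heap L (node_index (Call, RComp f gs, length v) nds) v y ws Hs).
  apply represents_node_heap; [exact HD | lia | |].
  { apply Forall_app. split; [|all_consistent].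
    apply Forall_forall. intros Hc HIn. apply In_nth with (d := []) in HIn as (j & Hj & <-).
    rewrite Hll in Hj. apply Rl, Hj. }
  intros r [<- | Hr].
  - apply root_rule_child with (j := length gs) (Hc := Hfr)
                                (k := node_index (Call, f, length gs) nds);
      [lia | lia | exact Hsm | reflexivity | exact Wf | exact Tf |].
    child_atoms If Of.
  - apply in_map_iff in Hr as (j & <- & Hj). apply in_seq in Hj.
    destruct (Rl j ltac:(lia)) as (_ & Wj & Tj & Ij & Oj).
    apply root_rule_child with (j := j) (Hc := nth j Hl [])
                                (k := node_index (Call, nth j gs RZero, length v) nds);
      [lia | lia | apply Hsj; lia | reflexivity | exact Wj | exact Tj |].
    child_atoms Ij Oj.
Qed.

Lemma realizable_prec0 f g v y : realizable f v y -> realizable (RPrec f g) (0%nat :: v) y.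
Proof.
  intros Hf HD. destruct (Hclosed _ HD) as [HDf HDg]. simpl in HDf.
  pose proof (Harity _ HD) as HarD. pose proof (Harity _ HDg) as Harg. simpl in HarD, Harg.
  destruct (Hf HDf) as [Hfr (Cf & Wf & Tf & If & Of)].
  exists (node_heap L (node_index (Call, RPrec f g, S (length v)) nds) (0%nat :: v) y [0%nat]
            [Hfr]).
  apply represents_node_heap; [exact HD | simpl; lia | all_consistent |].
  intros r Hr. repeat (destruct Hr as [<- | Hr]); [| | | | contradiction].
  - apply root_rule_local; [reflexivity|]. intros _. local_atoms_hold.
  - apply root_rule_child with (j := 0%nat) (Hc := Hfr) (k := node_index (Call, f, length v) nds);
      [simpl; lia | lia | reflexivity | reflexivity | exact Wf | exact Tf |].
    child_atoms If Of.
  - apply root_rule_vacuous. guard_fails.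
  - apply root_rule_vacuous. guard_fails.
Qed.

Lemma realizable_precS f g n v r y :
  realizable (RPrec f g) (n :: v) r -> realizable g (n :: r :: v) y ->
  realizable (RPrec f g) (S n :: v) y.
Proof.
  intros Hprev Hg HD. destruct (Hclosed _ HD) as [_ HDg].
  pose proof (Harity _ HD) as HarD. pose proof (Harity _ HDg) as Harg. simpl in HarD, Harg.
  destruct (Hprev HD) as [H1 (C1 & W1 & T1 & I1 & O1)].
  destruct (Hg HDg) as [H2 (C2 & W2 & T2 & I2 & O2)].
  exists (node_heap L (node_index (Call, RPrec f g, S (length v)) nds) (S n :: v) y [r]
            [H1; H2]).
  apply represents_node_heap; [exact HD | simpl; lia | all_consistent |].
  intros x Hx. repeat (destruct Hx as [<- | Hx]); [| | | | contradiction].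
  - apply root_rule_local; [reflexivity|]. intros _. local_atoms_hold.
  - apply root_rule_vacuous. guard_fails.
  - apply root_rule_child with (j := 0%nat) (Hc := H1)
                                (k := node_index (Call, RPrec f g, S (length v)) nds);
      [simpl; lia | lia | reflexivity | reflexivity | exact W1 | exact T1 |].
    child_atoms I1 O1.
  - apply root_rule_child with (j := 1%nat) (Hc := H2)
                                (k := node_index (Call, g, S (S (length v))) nds);
      [simpl; lia | lia | reflexivity | reflexivity | exact W2 | exact T2 |].
    child_atoms I2 O2.
Qed.

Lemma search_realizable f v n : In (Search, f, length v) nds ->
  (forall k, (k < n)%nat -> exists r, realizable f (k :: v) (S r)) ->
  forall c, (c <= n)%nat -> exists H, represents H (Search, f, length v) v c.
Proof.
  intros HD Hall. pose proof (Hclosed _ HD) as HDf. simpl in HDf.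
  pose proof (Harity _ HD) as HarD. pose proof (Harity _ HDf) as Harf. simpl in HarD, Harf.
  induction c as [|c IHc]; intros Hc.
  - exists (node_heap L (node_index (Search, f, length v) nds) v 0 [] []).
    apply represents_node_heap; [exact HD | lia | constructor |].
    intros x Hx. repeat (destruct Hx as [<- | Hx]); [| | contradiction];
      apply root_rule_vacuous; guard_fails.
  - destruct (IHc ltac:(lia)) as [Hch (Cc & Wc & Tc & Ic & Oc)].
    destruct (Hall c ltac:(lia)) as [r Hr].
    destruct (Hr HDf) as [Hfr (Cf & Wf & Tf & If & Of)].
    exists (node_heap L (node_index (Search, f, length v) nds) v (S c) [] [Hfr; Hch]).
    apply represents_node_heap; [exact HD | lia | all_consistent |].
    intros x Hx. repeat (destruct Hx as [<- | Hx]); [| | contradiction].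
    + apply root_rule_child with (j := 0%nat) (Hc := Hfr)
                                  (k := node_index (Call, f, S (length v)) nds);
        [simpl; lia | lia | reflexivity | reflexivity | exact Wf | exact Tf |].
      child_atoms If Of.
    + apply root_rule_child with (j := 1%nat) (Hc := Hch)
                                  (k := node_index (Search, f, length v) nds);
        [simpl; lia | lia | reflexivity | reflexivity | exact Wc | exact Tc |].
      child_atoms Ic Oc.
Qed.

Lemma realizable_mu f v n : realizable f (n :: v) 0%nat ->
  (forall k, (k < n)%nat -> exists r, realizable f (k :: v) (S r)) ->
  realizable (RMu f) v n.
Proof.
  intros Hf Hall HD. destruct (Hclosed _ HD) as [HDf HDs].
  pose proof (Harity _ HD) as HarD. pose proof (Harity _ HDf) as Harf. simpl in HarD, Harf.
  destruct (Hf HDf) as [Hfr (Cf & Wf & Tf & If & Of)].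
  destruct (search_realizable f v n HDs Hall n (le_n n)) as [Hch (Cc & Wc & Tc & Ic & Oc)].
  exists (node_heap L (node_index (Call, RMu f, length v) nds) v n [] [Hfr; Hch]).
  apply represents_node_heap; [exact HD | lia | all_consistent |].
  intros x Hx. repeat (destruct Hx as [<- | Hx]); [| | contradiction].
  - apply root_rule_child with (j := 0%nat) (Hc := Hfr)
                                (k := node_index (Call, f, S (length v)) nds);
      [simpl; lia | lia | reflexivity | reflexivity | exact Wf | exact Tf |].
    child_atoms If Of.
  - apply root_rule_child with (j := 1%nat) (Hc := Hch) (k := node_index (Search, f, length v) nds);
      [simpl; lia | lia | reflexivity | reflexivity | exact Wc | exact Tc |].
    child_atoms Ic Oc.
Qed.

Lemma realizable_of_reval f v y : reval f v y -> realizable f v y.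
Proof.
  revert f v y.
  apply (reval_nested_ind realizable (fun gs v ws => length ws = length gs /\
           forall j, (j < length gs)%nat -> realizable (nth j gs RZero) v (nth j ws 0%nat))).
  - apply realizable_zero.
  - apply realizable_succ.
  - apply realizable_proj.
  - intros f gs v ws y _ [Hlen Hgs] _ Hf. exact (realizable_comp f gs v ws y Hlen Hgs Hf).
  - intros f g v y _ Hf. apply realizable_prec0, Hf.
  - intros f g n v r y _ Hprev _ Hg. exact (realizable_precS f g n v r y Hprev Hg).
  - intros f v n _ Hf Hall. apply realizable_mu; [exact Hf|].
    intros k Hk. destruct (Hall k Hk) as (r & _ & Hr). exists r. exact Hr.
  - intros v. split; [reflexivity | intros j Hj; simpl in Hj; lia].
  - intros g gs v w ws _ Hg _ [Hlen Hgs]. split; [simpl; lia|].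
    intros [|j] Hj; [exact Hg | apply Hgs; simpl in Hj; lia].
Qed.

End Completeness.

(** * The diagonal sentence *)

Definition qf_below (k : nat) (f : form) : Prop := qfree f /\ vars_below k f.

Lemma qf_below_fconj_map {A} k (F : A -> form) l :
  (forall x, In x l -> qf_below k (F x)) -> qf_below k (fconj (map F l)).
Proof.
  induction l as [|x l IH]; intros H; simpl; [repeat split|].
  destruct (H x (or_introl eq_refl)) as [Hq Hv].
  destruct IH as [IHq IHv]; [intros; apply H; right; auto|].
  repeat split; assumption.
Qed.

Lemma term_vars_below_numeral k n : term_vars_below k (numeral n).
Proof. induction n; simpl; auto. Qed.

Ltac qf_below_leaf :=
  unfold qf_below, fpoints_to_in, fallocated, ftag_is, feq, ffalse, ftrue;
  cbn [qfree vars_below term_vars_below];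
  repeat split; auto using term_vars_below_numeral; lia.

Lemma qf_below_tr_atom W zb a : (1 <= W)%nat -> (zb + W <= 3 + W + W)%nat ->
  qf_below (3 + W + W) (tr_atom W zb a).
Proof.
  intros HW Hz. assert (Hr : forall r, term_vars_below (3 + W + W) (tr_field W zb r))
    by (intros []; simpl; unfold clamp; lia).
  destruct a; simpl; split; repeat split; auto using term_vars_below_numeral.
Qed.

Lemma qf_below_fblock_reads k W base s : term_vars_below k base -> (s + W <= k)%nat ->
  qf_below k (fblock_reads W base s).
Proof.
  intros Hb Hs. apply qf_below_fconj_map. intros o Ho. apply in_seq in Ho. qf_below_leaf.
Qed.

Lemma qf_below_fblock_allocated k W base : term_vars_below k base ->
  qf_below k (fblock_allocated W base).
Proof. intros Hb. apply qf_below_fconj_map. intros o _. qf_below_leaf. Qed.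

Lemma qf_below_FAnd k a b : qf_below k a -> qf_below k b -> qf_below k (FAnd a b).
Proof. intros [] []. repeat split; assumption. Qed.

Lemma qf_below_fimp k a b : qf_below k a -> qf_below k b -> qf_below k (fimp a b).
Proof. intros [] []. repeat split; assumption. Qed.

Ltac qf_below_step := first
  [ apply qf_below_fblock_reads; [simpl; unfold clamp; lia | lia]
  | apply qf_below_fblock_allocated; simpl; unfold clamp; lia
  | apply qf_below_FAnd | apply qf_below_fimp
  | apply qf_below_fconj_map; intros
  | apply qf_below_tr_atom; lia
  | qf_below_leaf ].

Lemma qf_below_rule_form W r : (1 <= W)%nat -> qf_below (3 + W + W) (rule_form W r).
Proof.
  intros HW. unfold rule_form. destruct (rule_child r) as [[o k] |]; cbn [fconj];
    repeat qf_below_step.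
Qed.

Lemma qf_below_computation_form W L k Rs : (L + 3 <= W)%nat ->
  qf_below (3 + W + W) (computation_form W L k Rs).
Proof.
  intros HW. unfold computation_form, root_form, in_off, out_off. cbn [fconj map].
  apply qf_below_FAnd.
  - repeat qf_below_step.
  - apply qf_below_fconj_map. intros r _. apply qf_below_rule_form. lia.
Qed.

Definition halting_form (L : nat) (f : recf) : form :=
  let nds := nodes_of f 1 in
  computation_form (rec_width L) L (node_index (Call, f, 1%nat) nds)
    (flat_map (rules_of L nds) nds).

Lemma qf_below_pin_halting_form L f x0 :
  qf_below (2 + (1 + rec_width L + rec_width L)) (pin_x0 x0 (halting_form L f)).
Proof.
  apply qf_below_FAnd.
  - qf_below_leaf.
  - apply qf_below_computation_form. unfold rec_width. lia.
Qed.

Section HaltingSentence.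
Variables (L : nat) (f : recf) (x0 : nat).
Hypothesis Har : arities_below L (nodes_of f 1).

Notation W := (rec_width L).
Notation nds := (nodes_of f 1).
Notation sentence := (EA_sentence 2 (1 + W + W) (pin_x0 x0 (halting_form L f))).

Lemma reval_of_satisfiable : satisfiable sentence -> reval f [x0] 0%nat.
Proof.
  intros (nv & h & Hfin & Hs). apply sat_exists_block in Hs as (e & _ & Hs).
  rewrite sat_forall_block in Hs.
  assert (He0 : e 0%nat = Z.of_nat x0).
  { destruct (Hs e (fun _ _ => eq_refl)) as [Hpin _].
    rewrite sat_feq, teval_numeral in Hpin. exact Hpin. }
  assert (HB : sat_for_all_fields W nv e h (halting_form L f))
    by (intros e' He'; apply (Hs e'); intros i Hi; apply He'; lia).
  apply computation_form_iff in HB as [(Ht & Hin & Hout) Hrules];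
    [|exact Hfin | unfold rec_width; lia | unfold rec_width; lia].
  assert (Hcert := certified_all L nds nv h (closed_nodes_of f 1) Har
    (fun D HD r Hr => Hrules r (proj2 (in_flat_map _ _ _) (ex_intro _ D (conj HD Hr))))
    f 1%nat (nodes_of_self f 1) (e 1%nat) Ht).
  unfold inputs_at, output_at in Hcert. rewrite nat_fields_S in Hcert.
  cbn [nat_fields seq map] in Hcert. rewrite Hin, Hout, He0, Nat2Z.id in Hcert. exact Hcert.
Qed.

Lemma satisfiable_of_reval : reval f [x0] 0%nat -> satisfiable sentence.
Proof.
  intros Hr.
  destruct (realizable_of_reval L nds (closed_nodes_of f 1) Har f [x0] 0%nat Hr (nodes_of_self f 1))
    as [H (HV & HW & Ht & Hin & Hout)].
  set (e := fun i => if Nat.eqb i 0 then Z.of_nat x0 else 0).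
  assert (Hall : sat_for_all_fields W (-1) e (list_heap H) (halting_form L f)).
  { apply computation_form_iff;
      [apply finite_list_heap | unfold rec_width; lia | unfold rec_width; lia |].
    split.
    - change (e 1%nat) with (Z.of_nat 0). change (e 0%nat) with (Z.of_nat x0).
      split; [|split].
      + apply tagged_block_list_heap; [unfold rec_width; lia|]. split; assumption.
      + rewrite field_at_list_heap. apply (Hin 0%nat). simpl; lia.
      + rewrite field_at_list_heap. exact Hout.
    - intros r Hr' a. apply in_flat_map in Hr' as (D & HD & Hr').
      exact (rules_hold_of_consistent L nds H HV D HD r Hr' a). }
  exists (-1), (list_heap H). split; [apply finite_list_heap|].
  apply sat_exists_block. exists e. split.
  { intros i Hi. unfold e. destruct (Nat.eqb_spec i 0); [lia | reflexivity]. }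
  rewrite sat_forall_block. intros e' He'. split.
  - rewrite sat_feq, teval_numeral. cbn [teval]. rewrite He' by lia. reflexivity.
  - apply Hall. intros i Hi. apply He'. lia.
Qed.

End HaltingSentence.

Lemma satisfiable_halting_iff L f x0 : arities_below L (nodes_of f 1) ->
  satisfiable (EA_sentence 2 (1 + rec_width L + rec_width L) (pin_x0 x0 (halting_form L f))) <->
  reval f [x0] 0%nat.
Proof. intros Har. split; [apply reval_of_satisfiable | apply satisfiable_of_reval]; exact Har. Qed.

Definition diag_arity (d : recf) : nat := S (Nat.max 3 (list_max (map snd (nodes_of d 1)))).

Lemma arities_below_diag d M N : arities_below (diag_arity d) (nodes_of (RComp d [rdiag M N]) 1).
Proof.
  intros D HD. unfold diag_arity. cbn [nodes_of length flat_map] in HD.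
  rewrite app_nil_r in HD. destruct HD as [<- | HD]; [cbn [snd]; lia|].
  apply in_app_iff in HD as [HD | HD].
  - pose proof (proj1 (list_max_le _ _) (le_n (list_max (map snd (nodes_of d 1))))) as Hmax.
    rewrite Forall_forall in Hmax. specialize (Hmax _ (in_map snd _ _ HD)). lia.
  - pose proof (arities_rdiag M N D HD). lia.
Qed.

Lemma reval_comp_rdiag d M N B y :
  reval (RComp d [rdiag M N]) [code_form B] y <-> reval d [code_EA M N (pin_x0 (code_form B) B)] y.
Proof.
  split.
  - intros Hq. apply reval_comp1_inv in Hq as (w & Hw & Hd).
    rewrite (reval_functional _ _ _ Hw _ (reval_rdiag M N B)) in Hd. exact Hd.
  - intros Hd. apply reval_comp1 with (w := code_EA M N (pin_x0 (code_form B) B)); auto.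
    apply reval_rdiag.
Qed.

Theorem theorem4 : ~ exists d : recf, decides_EA_sat d.
Proof.
  intros (d & Hd).
  set (L := diag_arity d). set (N := (1 + rec_width L + rec_width L)%nat).
  set (Q := RComp d [rdiag 2 N]). set (B := halting_form L Q).
  set (phi := pin_x0 (code_form B) B).
  assert (Hsat : satisfiable (EA_sentence 2 N phi) <-> reval Q [code_form B] 0%nat)
    by (apply satisfiable_halting_iff, arities_below_diag).
  assert (HQ : forall y, reval Q [code_form B] y <-> reval d [code_EA 2 N phi] y)
    by (intros; apply reval_comp_rdiag).
  destruct (qf_below_pin_halting_form L Q (code_form B)) as [Hq Hv].
  destruct (Hd 2%nat N phi Hq Hv) as [Hyes Hno].
  destruct (classic (satisfiable (EA_sentence 2 N phi))) as [Hs | Hs].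
  - pose proof (reval_functional _ _ _ (Hyes Hs) _ (proj1 (HQ 0%nat) (proj1 Hsat Hs))).
    discriminate.
  - apply Hs, Hsat, HQ, Hno, Hs.
Qed.
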